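(* Let $\lambda(\varepsilon)$ be the real root of $\det\Delta_\varepsilon(z)=0$ defined for small $\varepsilon>0$ with $\lambda(\varepsilon)\to\lambda_0$ as $\varepsilon\to0^+$. For $\delta>0$ sufficiently small and any $\delta_1>0$, there exists $\varepsilon_0>0$ such that for $0<\varepsilon<\varepsilon_0$, $\lambda(\varepsilon)$ is the only root of $\det\Delta_\varepsilon(z)=0$ in the strip $\lambda_0-\delta\le\Re z\le\lambda_0+\delta_1$.
   Context: $L:C([-\tau,0];\mathbb{R}^N)\to\mathbb{R}^N$ is a bounded linear operator; $L(e^{z\cdot}I)$ denotes the complex $N\times N$ matrix whose $j$-th column is $L$ (extended complex-linearly) applied to $\theta\mapsto e^{z\theta}e_j$. Let $\Delta_\varepsilon(z)=\varepsilon^2z^2I-zI+L(e^{z\cdot}I)$ (so $\Delta_0(z)=L(e^{z\cdot}I)-zI$). Assume $\lambda_0>0$ is a real simple zero of $\det\Delta_0$ that is dominant ($\Re z<\lambda_0$ for all other zeros $z$ of $\det\Delta_0$). By the implicit function theorem, for small $\varepsilon>0$ there is a simple real zero $\lambda(\varepsilon)$ of $\det\Delta_\varepsilon$ with $\lambda(\varepsilon)\to\lambda_0$. *)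

From Stdlib Require Import Reals.
Open Scope R_scope.

(** Complex numbers as pairs (real part, imaginary part). *)
Definition C := (R * R)%type.
Definition C0 : C := (0, 0).
Definition C1 : C := (1, 0).
Definition RtoC (x : R) : C := (x, 0).
Definition Cadd (a b : C) : C := (fst a + fst b, snd a + snd b).
Definition Copp (a : C) : C := (- fst a, - snd a).
Definition Csub (a b : C) : C := Cadd a (Copp b).
Definition Cmul (a b : C) : C :=
  (fst a * fst b - snd a * snd b, fst a * snd b + snd a * fst b).
Definition Cnorm (a : C) : R := sqrt (fst a * fst a + snd a * snd a).

Definition skip (i k : nat) : nat := if Nat.ltb k i then k else S k.
Definition minor (A : nat -> nat -> C) (i j : nat) : nat -> nat -> C :=
  fun k l => A (skip i k) (skip j l).
Definition Csum (f : nat -> C) (n : nat) : C :=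
  List.fold_right (fun j acc => Cadd (f j) acc) C0 (List.seq 0 n).
Definition sgn (j : nat) : C := if Nat.even j then C1 else Copp C1.
Fixpoint det (n : nat) (A : nat -> nat -> C) : C :=
  match n with
  | O => C1
  | S m => Csum (fun j => Cmul (sgn j) (Cmul (A 0%nat j) (det m (minor A 0 j)))) (S m)
  end.

(** Functions phi : [-tau,0] -> R^N are represented as R -> nat -> R
    (phi theta k = k-th component at theta); only theta in [-tau,0] and k < N matter. *)
Definition cont_on (tau : R) (N : nat) (phi : R -> nat -> R) : Prop :=
  forall k, (k < N)%nat -> forall t, -tau <= t <= 0 ->
  forall e, 0 < e -> exists d, 0 < d /\
    forall s, -tau <= s <= 0 -> Rabs (s - t) < d -> Rabs (phi s k - phi t k) < e.

Definition bounded_linear_op (tau : R) (N : nat)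
    (L : (R -> nat -> R) -> nat -> R) : Prop :=
  (forall phi psi, cont_on tau N phi -> cont_on tau N psi ->
     forall i, (i < N)%nat -> L (fun t k => phi t k + psi t k) i = L phi i + L psi i) /\
  (forall c phi, cont_on tau N phi ->
     forall i, (i < N)%nat -> L (fun t k => c * phi t k) i = c * L phi i) /\
  (exists M, forall phi B, cont_on tau N phi ->
     (forall t k, -tau <= t <= 0 -> (k < N)%nat -> Rabs (phi t k) <= B) ->
     forall i, (i < N)%nat -> Rabs (L phi i) <= M * B).

(** Entry (i,j) of L(e^{z.} I), L extended complex-linearly:
    L(e^{z.} e_j) = L(Re(e^{z.}) e_j) + i L(Im(e^{z.}) e_j). *)
Definition Lexp (L : (R -> nat -> R) -> nat -> R) (z : C) (i j : nat) : C :=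
  (L (fun t k => if Nat.eqb k j then exp (fst z * t) * cos (snd z * t) else 0) i,
   L (fun t k => if Nat.eqb k j then exp (fst z * t) * sin (snd z * t) else 0) i).

Definition Delta (L : (R -> nat -> R) -> nat -> R) (eps : R) (z : C) (i j : nat) : C :=
  Cadd (if Nat.eqb i j then Csub (Cmul (RtoC (eps * eps)) (Cmul z z)) z else C0)
       (Lexp L z i j).

Definition charfun (L : (R -> nat -> R) -> nat -> R) (N : nat) (eps : R) (z : C) : C :=
  det N (Delta L eps z).

Definition Cderiv (f : C -> C) (z d : C) : Prop :=
  forall e, 0 < e -> exists r, 0 < r /\
    forall h, Cnorm h < r ->
      Cnorm (Csub (Csub (f (Cadd z h)) (f z)) (Cmul d h)) <= e * Cnorm h.

(* Write [f eps = det Delta_eps]. On a fixed closed ball the maps [f eps], [0 <= eps <= 1], are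
   uniformly C^{1,1} and [f eps - f 0 = O(eps^2)], so the derivatives of [f eps] at [lam0] stay
   close to [f 0'(lam0) <> 0]; hence all [f eps] with [eps] small are injective on one disc
   around [lam0], where [lam eps] is then the only root. In [Re z >= 0] there is no root with
   [|z| >= Y0] while [eps^2 Re z <= 1/2], because the diagonal [eps^2 z^2 - z] dominates the
   bounded entries of [L(e^{z.} I)]. On the remaining compact part of the strip, outside the
   disc, dominance and compactness give [|f 0| >= m > 0], which survives the [O(eps^2)]
   perturbation once [eps] is small. *)

From Stdlib Require Import Reals Lra Lia Psatz List.
From Stdlib Require Import Classical ClassicalEpsilon FunctionalExtensionality.
From Stdlib Require Import Factorial.
Open Scope R_scope.

(** * Complex numbers *)

Lemma Cext (a b : C) : fst a = fst b -> snd a = snd b -> a = b.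
Proof. destruct a, b; simpl; intros; subst; reflexivity. Qed.

Ltac Cring := apply Cext; unfold Csub, Cadd, Copp, Cmul, RtoC, C0, C1; simpl; ring.

Lemma Cnorm_pos a : 0 <= Cnorm a.
Proof. unfold Cnorm; apply sqrt_pos. Qed.

Lemma Cnorm_sqr a : Cnorm a * Cnorm a = fst a * fst a + snd a * snd a.
Proof. unfold Cnorm; apply sqrt_sqrt; nra. Qed.

Lemma Cnorm_fst a : Rabs (fst a) <= Cnorm a.
Proof.
  pose proof (Cnorm_sqr a); pose proof (Cnorm_pos a).
  apply Rsqr_incr_0_var; [|auto]. rewrite <- Rsqr_abs. unfold Rsqr; nra.
Qed.

Lemma Cnorm_snd a : Rabs (snd a) <= Cnorm a.
Proof.
  pose proof (Cnorm_sqr a); pose proof (Cnorm_pos a).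
  apply Rsqr_incr_0_var; [|auto]. rewrite <- Rsqr_abs. unfold Rsqr; nra.
Qed.

Lemma Cnorm_le_l1 a : Cnorm a <= Rabs (fst a) + Rabs (snd a).
Proof.
  pose proof (Cnorm_sqr a); pose proof (Cnorm_pos a).
  pose proof (Rabs_pos (fst a)); pose proof (Rabs_pos (snd a)).
  apply Rsqr_incr_0_var; [|lra]. unfold Rsqr.
  pose proof (Rsqr_abs (fst a)); pose proof (Rsqr_abs (snd a)); unfold Rsqr in *. nra.
Qed.

Lemma Cnorm_mult a b : Cnorm (Cmul a b) = Cnorm a * Cnorm b.
Proof.
  pose proof (Cnorm_sqr a); pose proof (Cnorm_pos a).
  pose proof (Cnorm_sqr b); pose proof (Cnorm_pos b).
  pose proof (Cnorm_sqr (Cmul a b)); pose proof (Cnorm_pos (Cmul a b)).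
  assert (E : Cnorm (Cmul a b) * Cnorm (Cmul a b) = (Cnorm a * Cnorm b) * (Cnorm a * Cnorm b)).
  { rewrite H3. transitivity ((Cnorm a * Cnorm a) * (Cnorm b * Cnorm b)); [|ring].
    rewrite H, H1; unfold Cmul; simpl; ring. }
  apply Rsqr_inj; unfold Rsqr; [auto|nra|exact E].
Qed.

Lemma Cnorm_triang a b : Cnorm (Cadd a b) <= Cnorm a + Cnorm b.
Proof.
  pose proof (Cnorm_sqr a); pose proof (Cnorm_pos a).
  pose proof (Cnorm_sqr b); pose proof (Cnorm_pos b).
  pose proof (Cnorm_sqr (Cadd a b)); pose proof (Cnorm_pos (Cadd a b)).
  unfold Cadd in *; simpl in *.
  assert (Cauchy_Schwarz : fst a * fst b + snd a * snd b <= Cnorm a * Cnorm b).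
  { assert (E : (Cnorm a * Cnorm b) * (Cnorm a * Cnorm b)
              = (fst a * fst a + snd a * snd a) * (fst b * fst b + snd b * snd b))
      by (rewrite <- H, <- H1; ring).
    pose proof (Rle_0_sqr (fst a * snd b - snd a * fst b)); unfold Rsqr in *.
    assert (0 <= Cnorm a * Cnorm b) by nra. nra. }
  apply Rsqr_incr_0_var; unfold Rsqr; nra.
Qed.

Lemma Cnorm_opp a : Cnorm (Copp a) = Cnorm a.
Proof. unfold Cnorm, Copp; simpl; f_equal; ring. Qed.

Lemma Cnorm_sub_le a b : Cnorm (Csub a b) <= Cnorm a + Cnorm b.
Proof. unfold Csub; rewrite <- (Cnorm_opp b); apply Cnorm_triang. Qed.

Lemma Cnorm_sub_sym a b : Cnorm (Csub a b) = Cnorm (Csub b a).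
Proof. replace (Csub a b) with (Copp (Csub b a)) by Cring. apply Cnorm_opp. Qed.

Lemma Cnorm_dist_triang a b c : Cnorm (Csub a c) <= Cnorm (Csub a b) + Cnorm (Csub b c).
Proof. replace (Csub a c) with (Cadd (Csub a b) (Csub b c)) by Cring. apply Cnorm_triang. Qed.

Lemma Cnorm_le_dist z w : Cnorm z <= Cnorm (Csub z w) + Cnorm w.
Proof. replace z with (Cadd (Csub z w) w) at 1 by Cring. apply Cnorm_triang. Qed.

Lemma Cnorm_triang_rev a b : Cnorm a - Cnorm b <= Cnorm (Cadd a b).
Proof.
  pose proof (Cnorm_triang (Cadd a b) (Copp b)). rewrite Cnorm_opp in H.
  replace (Cadd (Cadd a b) (Copp b)) with a in H by Cring. lra.
Qed.

Lemma Cnorm_RtoC x : Cnorm (RtoC x) = Rabs x.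
Proof. unfold Cnorm, RtoC; simpl. rewrite Rmult_0_l, Rplus_0_r. apply sqrt_Rsqr_abs. Qed.

Lemma Cnorm_C0 : Cnorm C0 = 0.
Proof. unfold Cnorm, C0; simpl. rewrite Rmult_0_l, Rplus_0_r. apply sqrt_0. Qed.

Lemma Cnorm_C1 : Cnorm C1 = 1.
Proof. unfold Cnorm, C1; simpl. rewrite Rmult_0_l, Rplus_0_r, Rmult_1_l. apply sqrt_1. Qed.

Lemma Cnorm_eq0 a : Cnorm a = 0 -> a = C0.
Proof.
  intro H. pose proof (Cnorm_fst a); pose proof (Cnorm_snd a). rewrite H in *.
  pose proof (Rabs_pos (fst a)); pose proof (Rabs_pos (snd a)).
  apply Cext; simpl; [destruct (Req_dec (fst a) 0) as [E|E]|destruct (Req_dec (snd a) 0) as [E|E]];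
  auto; apply Rabs_pos_lt in E; lra.
Qed.

Lemma Cnorm_sub_eq0 a b : Cnorm (Csub a b) = 0 -> a = b.
Proof.
  intro H; apply Cnorm_eq0 in H. unfold Csub, Cadd, Copp, C0 in H.
  injection H; intros. apply Cext; lra.
Qed.

Lemma Cnorm_fst_sub x y : fst x - fst y <= Cnorm (Csub x y).
Proof.
  pose proof (Cnorm_fst (Csub x y)) as H.
  replace (fst (Csub x y)) with (fst x - fst y) in H by (unfold Csub, Cadd, Copp; simpl; ring).
  pose proof (Rle_abs (fst x - fst y)). lra.
Qed.

(** * Determinant estimates *)

Lemma Csum_bound f n c :
  (forall j, (j < n)%nat -> Cnorm (f j) <= c) -> Cnorm (Csum f n) <= INR n * c.
Proof.
  intros H. unfold Csum. rewrite <- (length_seq n 0) at 2.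
  assert (Hl : forall j, In j (seq 0 n) -> Cnorm (f j) <= c)
    by (intros j Hj; apply in_seq in Hj; apply H; lia).
  induction (seq 0 n) as [|a l IH]; cbn [fold_right length].
  - rewrite Cnorm_C0; simpl; lra.
  - eapply Rle_trans; [apply Cnorm_triang|]. rewrite S_INR.
    assert (Cnorm (f a) <= c) by (apply Hl; left; auto).
    assert (Cnorm (fold_right (fun j acc => Cadd (f j) acc) C0 l) <= INR (length l) * c)
      by (apply IH; intros; apply Hl; right; auto).
    lra.
Qed.

Lemma Csum_sub f g n : Csub (Csum f n) (Csum g n) = Csum (fun j => Csub (f j) (g j)) n.
Proof.
  unfold Csum. induction (seq 0 n) as [|a l IH]; simpl.
  - Cring.
  - rewrite <- IH. Cring.
Qed.

Lemma Csum_S f m : Csum f (S m) = Cadd (f 0%nat) (Csum (fun j => f (S j)) m).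
Proof.
  unfold Csum. cbn [seq fold_right]. f_equal.
  generalize 0%nat. induction m as [|m IH]; intros k; simpl; auto. now rewrite IH.
Qed.

Lemma skip_lt i k m : (k < m)%nat -> (skip i k < S m)%nat.
Proof. unfold skip; destruct (Nat.ltb k i); lia. Qed.

Lemma Cnorm_sgn j : Cnorm (sgn j) = 1.
Proof. unfold sgn; destruct (Nat.even j); [|rewrite Cnorm_opp]; apply Cnorm_C1. Qed.

Lemma det_bound n : forall A B, 0 <= B ->
  (forall i j, (i < n)%nat -> (j < n)%nat -> Cnorm (A i j) <= B) ->
  Cnorm (det n A) <= INR (fact n) * B ^ n.
Proof.
  induction n as [|m IH]; intros A B HB H.
  - simpl. rewrite Cnorm_C1. lra.
  - simpl det. eapply Rle_trans.
    + apply (Csum_bound _ _ (B * (INR (fact m) * B ^ m))).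
      intros j Hj. rewrite !Cnorm_mult, Cnorm_sgn, Rmult_1_l.
      apply Rmult_le_compat; try apply Cnorm_pos; [apply H; lia|].
      apply IH; auto. intros i k Hi Hk. unfold minor. apply H; apply skip_lt; auto.
    + replace (fact (S m)) with (S m * fact m)%nat by reflexivity.
      rewrite mult_INR. simpl pow. lra.
Qed.

(* Lipschitz constant of [det n] for the entrywise sup norm on matrices bounded by [B]. *)
Fixpoint det_lip (n : nat) (B : R) : R :=
  match n with
  | O => 0
  | S m => INR (S m) * (INR (fact m) * B ^ m + B * det_lip m B)
  end.

Lemma det_lip_pos n B : 0 <= B -> 0 <= det_lip n B.
Proof.
  intros HB; induction n; cbn [det_lip]; [lra|].
  apply Rmult_le_pos; [apply pos_INR|].
  pose proof (pos_INR (fact n)); pose proof (pow_le B n HB). nra.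
Qed.

Lemma det_lipschitz n : forall A A' B d, 0 <= B ->
  (forall i j, (i < n)%nat -> (j < n)%nat ->
     Cnorm (A i j) <= B /\ Cnorm (A' i j) <= B /\ Cnorm (Csub (A i j) (A' i j)) <= d) ->
  Cnorm (Csub (det n A) (det n A')) <= det_lip n B * d.
Proof.
  induction n as [|m IH]; intros A A' B d HB H.
  - simpl. replace (Csub C1 C1) with C0 by Cring. rewrite Cnorm_C0. lra.
  - assert (Hd : 0 <= d).
    { destruct (H 0%nat 0%nat) as [_ [_ X]]; try lia.
      pose proof (Cnorm_pos (Csub (A 0%nat 0%nat) (A' 0%nat 0%nat))). lra. }
    simpl det. rewrite Csum_sub. eapply Rle_trans.
    + apply (Csum_bound _ _ (d * (INR (fact m) * B ^ m) + B * (det_lip m B * d))).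
      intros j Hj.
      set (M := minor A 0 j). set (M' := minor A' 0 j).
      replace (Csub (Cmul (sgn j) (Cmul (A 0%nat j) (det m M)))
                    (Cmul (sgn j) (Cmul (A' 0%nat j) (det m M'))))
        with (Cmul (sgn j) (Cadd (Cmul (Csub (A 0%nat j) (A' 0%nat j)) (det m M))
                                 (Cmul (A' 0%nat j) (Csub (det m M) (det m M'))))) by Cring.
      rewrite Cnorm_mult, Cnorm_sgn, Rmult_1_l.
      eapply Rle_trans; [apply Cnorm_triang|]. rewrite !Cnorm_mult.
      destruct (H 0%nat j) as [H1 [H2 H3]]; try lia.
      assert (Cnorm (det m M) <= INR (fact m) * B ^ m).
      { apply det_bound; auto. intros i k Hi Hk. unfold M, minor. apply H; apply skip_lt; auto. }
      assert (Cnorm (Csub (det m M) (det m M')) <= det_lip m B * d).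
      { apply IH; auto. intros i k Hi Hk. unfold M, M', minor. apply H; apply skip_lt; auto. }
      apply Rplus_le_compat; apply Rmult_le_compat; auto using Cnorm_pos.
    + cbn [det_lip]. lra.
Qed.

Definition shift_diag (mu : C) (B : nat -> nat -> C) : nat -> nat -> C :=
  fun i j => Cadd (if Nat.eqb i j then mu else C0) (B i j).

Lemma Cnorm_shift_diag mu B beta i j :
  Cnorm (B i j) <= beta -> Cnorm (shift_diag mu B i j) <= Cnorm mu + beta.
Proof.
  intros H. unfold shift_diag. eapply Rle_trans; [apply Cnorm_triang|].
  destruct (Nat.eqb i j); [lra|]. rewrite Cnorm_C0. pose proof (Cnorm_pos mu); lra.
Qed.

Lemma det_shift_offdiag_bound m mu B beta : 0 <= beta <= Cnorm mu ->
  (forall i j, (i < S m)%nat -> (j < S m)%nat -> Cnorm (B i j) <= beta) ->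
  Cnorm (Csum (fun j => Cmul (sgn (S j)) (Cmul (shift_diag mu B 0%nat (S j))
                         (det m (minor (shift_diag mu B) 0 (S j))))) m)
  <= INR m * beta * (INR (fact m) * 2 ^ m) * Cnorm mu ^ m.
Proof.
  intros Hb HB. eapply Rle_trans.
  - apply (Csum_bound _ _ (beta * (INR (fact m) * (Cnorm mu + beta) ^ m))).
    intros j Hj. rewrite !Cnorm_mult, Cnorm_sgn, Rmult_1_l.
    apply Rmult_le_compat; try apply Cnorm_pos.
    + unfold shift_diag. simpl. replace (Cadd C0 (B 0%nat (S j))) with (B 0%nat (S j)) by Cring.
      apply HB; lia.
    + apply det_bound; [pose proof (Cnorm_pos mu); lra|].
      intros i k Hi Hk. unfold minor. apply Cnorm_shift_diag. apply HB; apply skip_lt; auto.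
  - assert ((Cnorm mu + beta) ^ m <= 2 ^ m * Cnorm mu ^ m).
    { rewrite <- Rpow_mult_distr. apply pow_incr. pose proof (Cnorm_pos mu). lra. }
    pose proof (pos_INR m); pose proof (pos_INR (fact m)).
    assert (0 <= INR m * beta * INR (fact m)) by (apply Rmult_le_pos; [apply Rmult_le_pos|]; lra).
    replace (INR m * (beta * (INR (fact m) * (Cnorm mu + beta) ^ m))) with
      ((INR m * beta * INR (fact m)) * (Cnorm mu + beta) ^ m) by ring.
    replace (INR m * beta * (INR (fact m) * 2 ^ m) * Cnorm mu ^ m) with
      ((INR m * beta * INR (fact m)) * (2 ^ m * Cnorm mu ^ m)) by ring.
    apply Rmult_le_compat_l; auto.
Qed.

(* Expanding along the first row, the diagonal term dominates the [m] others once [|mu|] is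
   large. *)
Lemma det_shift_lower_bound n : forall beta, 0 <= beta -> exists c T, 0 < c /\
  forall mu B, T <= Cnorm mu ->
  (forall i j, (i < n)%nat -> (j < n)%nat -> Cnorm (B i j) <= beta) ->
  c * Cnorm mu ^ n <= Cnorm (det n (shift_diag mu B)).
Proof.
  induction n as [|m IH]; intros beta Hb.
  - exists 1, 0. split; [lra|]. intros. simpl. rewrite Cnorm_C1. lra.
  - destruct (IH beta Hb) as [c [T [Hc HT]]].
    set (K := INR m * beta * (INR (fact m) * 2 ^ m)).
    assert (HK : 0 <= K).
    { unfold K. pose proof (pos_INR m); pose proof (pos_INR (fact m)).
      pose proof (pow_le 2 m ltac:(lra)).
      apply Rmult_le_pos; [apply Rmult_le_pos|apply Rmult_le_pos]; auto. }
    set (T' := Rmax T (Rmax beta (2 * beta + 2 * K / c + 1))).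
    exists (c / 2), T'. split; [lra|].
    intros mu B Hmu HB. unfold T' in Hmu.
    pose proof (Rmax_l T (Rmax beta (2 * beta + 2 * K / c + 1))).
    pose proof (Rmax_r T (Rmax beta (2 * beta + 2 * K / c + 1))).
    pose proof (Rmax_l beta (2 * beta + 2 * K / c + 1)).
    pose proof (Rmax_r beta (2 * beta + 2 * K / c + 1)).
    set (P := Cnorm mu ^ m).
    assert (HP : 0 <= P) by (apply pow_le, Cnorm_pos).
    simpl det. rewrite Csum_S.
    assert (Hdiag : (Cnorm mu - beta) * (c * P) <= Cnorm (Cmul (sgn 0)
              (Cmul (shift_diag mu B 0%nat 0%nat) (det m (minor (shift_diag mu B) 0 0))))).
    { rewrite !Cnorm_mult, Cnorm_sgn, Rmult_1_l.
      apply Rmult_le_compat; try lra.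
      - apply Rmult_le_pos; lra.
      - unfold shift_diag. simpl. pose proof (Cnorm_triang_rev mu (B 0%nat 0%nat)).
        pose proof (HB 0%nat 0%nat ltac:(lia) ltac:(lia)). lra.
      - change (minor (shift_diag mu B) 0 0) with (shift_diag mu (fun i j => B (S i) (S j))).
        apply HT; [lra|]. intros i j Hi Hj. apply HB; lia. }
    pose proof (det_shift_offdiag_bound m mu B beta ltac:(lra) HB) as Hoff. fold K P in Hoff.
    pose proof (Cnorm_triang_rev (Cmul (sgn 0) (Cmul (shift_diag mu B 0%nat 0%nat)
                  (det m (minor (shift_diag mu B) 0 0))))
      (Csum (fun j => Cmul (sgn (S j)) (Cmul (shift_diag mu B 0%nat (S j))
                  (det m (minor (shift_diag mu B) 0 (S j))))) m)).
    assert (Hkey : c / 2 * Cnorm mu ^ S m <= (Cnorm mu - beta) * (c * P) - K * P).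
    { simpl pow. fold P.
      assert (c / 2 * Cnorm mu <= (Cnorm mu - beta) * c - K).
      { assert (2 * K / c * c = 2 * K) by (field; lra). nra. }
      nra. }
    lra.
Qed.

(** * Regular maps on a disc *)

(* The freedom
   in [u] is what makes the class closed under products. *)
Definition regular_on (R0 : R) (g g' : C -> C) (K : R) : Prop :=
  0 <= K /\
  (forall z, Cnorm z <= R0 -> Cnorm (g z) <= K) /\
  (forall z, Cnorm z <= R0 -> Cnorm (g' z) <= K) /\
  (forall z w, Cnorm z <= R0 -> Cnorm w <= R0 ->
     Cnorm (Csub (g z) (g w)) <= K * Cnorm (Csub z w)) /\
  (forall z w u, Cnorm z <= R0 -> Cnorm w <= R0 -> Cnorm u <= R0 ->
     Cnorm (Csub (Csub (g z) (g w)) (Cmul (g' u) (Csub z w)))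
       <= K * (Cnorm (Csub z w) * (Cnorm (Csub z u) + Cnorm (Csub w u)))).

Lemma regular_on_mono R0 g g' K K' : K <= K' -> regular_on R0 g g' K -> regular_on R0 g g' K'.
Proof.
  intros HK [H0 [H1 [H2 [H3 H4]]]]. repeat split.
  - lra.
  - intros z Hz; specialize (H1 z Hz); lra.
  - intros z Hz; specialize (H2 z Hz); lra.
  - intros z w Hz Hw; specialize (H3 z w Hz Hw). pose proof (Cnorm_pos (Csub z w)). nra.
  - intros z w u Hz Hw Hu; specialize (H4 z w u Hz Hw Hu).
    pose proof (Cnorm_pos (Csub z w)); pose proof (Cnorm_pos (Csub z u));
      pose proof (Cnorm_pos (Csub w u)).
    assert (0 <= Cnorm (Csub z w) * (Cnorm (Csub z u) + Cnorm (Csub w u))) by nra. nra.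
Qed.

Lemma regular_on_ext R0 g g' h' K :
  (forall z, g' z = h' z) -> regular_on R0 g g' K -> regular_on R0 g h' K.
Proof.
  intros E H. replace h' with g' by (apply functional_extensionality; auto). exact H.
Qed.

Lemma regular_on_const R0 c : regular_on R0 (fun _ => c) (fun _ => C0) (Cnorm c).
Proof.
  pose proof (Cnorm_pos c).
  repeat split; intros; try lra.
  - rewrite Cnorm_C0; lra.
  - replace (Csub c c) with C0 by Cring. rewrite Cnorm_C0.
    apply Rmult_le_pos; auto using Cnorm_pos.
  - replace (Csub (Csub c c) (Cmul C0 (Csub z w))) with C0 by Cring. rewrite Cnorm_C0.
    pose proof (Cnorm_pos (Csub z w)); pose proof (Cnorm_pos (Csub z u));
      pose proof (Cnorm_pos (Csub w u)).
    apply Rmult_le_pos; [lra|]. apply Rmult_le_pos; lra.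
Qed.

Lemma regular_on_id R0 : 0 <= R0 -> regular_on R0 (fun z => z) (fun _ => C1) (R0 + 1).
Proof.
  intros HR. repeat split; intros; try lra.
  - rewrite Cnorm_C1; lra.
  - pose proof (Cnorm_pos (Csub z w)); nra.
  - replace (Csub (Csub z w) (Cmul C1 (Csub z w))) with C0 by Cring. rewrite Cnorm_C0.
    pose proof (Cnorm_pos (Csub z w)); pose proof (Cnorm_pos (Csub z u));
      pose proof (Cnorm_pos (Csub w u)).
    apply Rmult_le_pos; [lra|]. apply Rmult_le_pos; lra.
Qed.

Lemma regular_on_add R0 g g' h h' K1 K2 : regular_on R0 g g' K1 -> regular_on R0 h h' K2 ->
  regular_on R0 (fun z => Cadd (g z) (h z)) (fun z => Cadd (g' z) (h' z)) (K1 + K2).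
Proof.
  intros [G0 [G1 [G2 [G3 G4]]]] [H0 [H1 [H2 [H3 H4]]]]. repeat split.
  - lra.
  - intros z H. eapply Rle_trans; [apply Cnorm_triang|].
    specialize (G1 z H); specialize (H1 z H); lra.
  - intros z H. eapply Rle_trans; [apply Cnorm_triang|].
    specialize (G2 z H); specialize (H2 z H); lra.
  - intros z w H H5.
    replace (Csub (Cadd (g z) (h z)) (Cadd (g w) (h w)))
      with (Cadd (Csub (g z) (g w)) (Csub (h z) (h w))) by Cring.
    eapply Rle_trans; [apply Cnorm_triang|].
    specialize (G3 z w H H5); specialize (H3 z w H H5); lra.
  - intros z w u H H5 H6.
    replace (Csub (Csub (Cadd (g z) (h z)) (Cadd (g w) (h w)))
                  (Cmul (Cadd (g' u) (h' u)) (Csub z w)))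
      with (Cadd (Csub (Csub (g z) (g w)) (Cmul (g' u) (Csub z w)))
                 (Csub (Csub (h z) (h w)) (Cmul (h' u) (Csub z w)))) by Cring.
    eapply Rle_trans; [apply Cnorm_triang|].
    specialize (G4 z w u H H5 H6); specialize (H4 z w u H H5 H6); lra.
Qed.

Lemma regular_on_opp R0 g g' K : regular_on R0 g g' K ->
  regular_on R0 (fun z => Copp (g z)) (fun z => Copp (g' z)) K.
Proof.
  intros [G0 [G1 [G2 [G3 G4]]]]. repeat split; intros; try rewrite Cnorm_opp; auto.
  - replace (Csub (Copp (g z)) (Copp (g w))) with (Copp (Csub (g z) (g w))) by Cring.
    rewrite Cnorm_opp; auto.
  - replace (Csub (Csub (Copp (g z)) (Copp (g w))) (Cmul (Copp (g' u)) (Csub z w)))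
      with (Copp (Csub (Csub (g z) (g w)) (Cmul (g' u) (Csub z w)))) by Cring.
    rewrite Cnorm_opp; auto.
Qed.

Lemma regular_on_scale R0 c g g' K : regular_on R0 g g' K ->
  regular_on R0 (fun z => Cmul c (g z)) (fun z => Cmul c (g' z)) (Cnorm c * K).
Proof.
  intros [G0 [G1 [G2 [G3 G4]]]]. pose proof (Cnorm_pos c).
  repeat split; intros.
  - apply Rmult_le_pos; auto.
  - rewrite Cnorm_mult. apply Rmult_le_compat_l; auto.
  - rewrite Cnorm_mult. apply Rmult_le_compat_l; auto.
  - replace (Csub (Cmul c (g z)) (Cmul c (g w))) with (Cmul c (Csub (g z) (g w))) by Cring.
    rewrite Cnorm_mult, Rmult_assoc. apply Rmult_le_compat_l; auto.
  - replace (Csub (Csub (Cmul c (g z)) (Cmul c (g w))) (Cmul (Cmul c (g' u)) (Csub z w)))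
      with (Cmul c (Csub (Csub (g z) (g w)) (Cmul (g' u) (Csub z w)))) by Cring.
    rewrite Cnorm_mult, Rmult_assoc. apply Rmult_le_compat_l; auto.
Qed.

Lemma mul_taylor_remainder R0 g g' h h' K1 K2 : regular_on R0 g g' K1 -> regular_on R0 h h' K2 ->
  forall z w u, Cnorm z <= R0 -> Cnorm w <= R0 -> Cnorm u <= R0 ->
  Cnorm (Csub (Csub (Cmul (g z) (h z)) (Cmul (g w) (h w)))
              (Cmul (Cadd (Cmul (g' u) (h u)) (Cmul (g u) (h' u))) (Csub z w)))
  <= 4 * K1 * K2 * (Cnorm (Csub z w) * (Cnorm (Csub z u) + Cnorm (Csub w u))).
Proof.
  intros [G0 [G1 [G2 [G3 G4]]]] [H0 [H1 [H2 [H3 H4]]]] z w u Hz Hw Hu.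
  set (Dz := Csub z w).
  replace (Csub (Csub (Cmul (g z) (h z)) (Cmul (g w) (h w)))
                (Cmul (Cadd (Cmul (g' u) (h u)) (Cmul (g u) (h' u))) Dz))
    with (Cadd (Cadd (Cmul (g z) (Csub (Csub (h z) (h w)) (Cmul (h' u) Dz)))
                     (Cmul (Cmul (Csub (g z) (g u)) (h' u)) Dz))
               (Cadd (Cmul (Csub (Csub (g z) (g w)) (Cmul (g' u) Dz)) (h w))
                     (Cmul (Cmul (g' u) Dz) (Csub (h w) (h u))))) by (unfold Dz; Cring).
  eapply Rle_trans; [apply Cnorm_triang|].
  eapply Rle_trans; [apply Rplus_le_compat; apply Cnorm_triang|].
  rewrite !Cnorm_mult.
  set (D := Cnorm Dz). set (a := Cnorm (Csub z u)). set (b := Cnorm (Csub w u)).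
  assert (0 <= D) by apply Cnorm_pos. assert (0 <= a) by apply Cnorm_pos.
  assert (0 <= b) by apply Cnorm_pos.
  specialize (G1 z Hz); specialize (H1 w Hw); specialize (G2 u Hu); specialize (H2 u Hu).
  specialize (G3 z u Hz Hu); specialize (H3 w u Hw Hu).
  specialize (G4 z w u Hz Hw Hu); specialize (H4 z w u Hz Hw Hu).
  fold Dz D a b in G3, H3, G4, H4.
  assert (T1 : Cnorm (g z) * Cnorm (Csub (Csub (h z) (h w)) (Cmul (h' u) Dz))
               <= K1 * (K2 * (D * (a + b))))
    by (apply Rmult_le_compat; auto using Cnorm_pos).
  assert (T2 : Cnorm (Csub (g z) (g u)) * Cnorm (h' u) * D <= (K1 * a) * K2 * D).
  { apply Rmult_le_compat_r; auto. apply Rmult_le_compat; auto using Cnorm_pos. }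
  assert (T3 : Cnorm (Csub (Csub (g z) (g w)) (Cmul (g' u) Dz)) * Cnorm (h w)
               <= (K1 * (D * (a + b))) * K2)
    by (apply Rmult_le_compat; auto using Cnorm_pos).
  assert (T4 : Cnorm (g' u) * D * Cnorm (Csub (h w) (h u)) <= (K1 * D) * (K2 * b)).
  { apply Rmult_le_compat; auto using Cnorm_pos.
    - apply Rmult_le_pos; auto using Cnorm_pos.
    - apply Rmult_le_compat_r; auto. }
  assert (0 <= K1 * K2 * D) by (repeat apply Rmult_le_pos; auto).
  assert (K1 * K2 * D * a <= K1 * K2 * D * (a + b)) by (apply Rmult_le_compat_l; lra).
  assert (K1 * K2 * D * b <= K1 * K2 * D * (a + b)) by (apply Rmult_le_compat_l; lra).
  nra.
Qed.

Lemma regular_on_mul R0 g g' h h' K1 K2 : regular_on R0 g g' K1 -> regular_on R0 h h' K2 ->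
  regular_on R0 (fun z => Cmul (g z) (h z))
    (fun z => Cadd (Cmul (g' z) (h z)) (Cmul (g z) (h' z))) (4 * K1 * K2).
Proof.
  intros Hg Hh. pose proof (mul_taylor_remainder R0 g g' h h' K1 K2 Hg Hh) as Hrem.
  destruct Hg as [G0 [G1 [G2 [G3 _]]]], Hh as [H0 [H1 [H2 [H3 _]]]].
  repeat split; [nra| | | |exact Hrem].
  - intros z H. rewrite Cnorm_mult. specialize (G1 z H); specialize (H1 z H).
    assert (Cnorm (g z) * Cnorm (h z) <= K1 * K2)
      by (apply Rmult_le_compat; auto using Cnorm_pos). nra.
  - intros z H. eapply Rle_trans; [apply Cnorm_triang|]. rewrite !Cnorm_mult.
    specialize (G1 z H); specialize (H1 z H); specialize (G2 z H); specialize (H2 z H).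
    assert (Cnorm (g' z) * Cnorm (h z) <= K1 * K2)
      by (apply Rmult_le_compat; auto using Cnorm_pos).
    assert (Cnorm (g z) * Cnorm (h' z) <= K1 * K2)
      by (apply Rmult_le_compat; auto using Cnorm_pos).
    nra.
  - intros z w H H5. replace (Csub (Cmul (g z) (h z)) (Cmul (g w) (h w)))
      with (Cadd (Cmul (g z) (Csub (h z) (h w))) (Cmul (Csub (g z) (g w)) (h w))) by Cring.
    eapply Rle_trans; [apply Cnorm_triang|]. rewrite !Cnorm_mult.
    specialize (G1 z H); specialize (H1 w H5); specialize (G3 z w H H5); specialize (H3 z w H H5).
    set (D := Cnorm (Csub z w)). assert (0 <= D) by apply Cnorm_pos.
    assert (Cnorm (g z) * Cnorm (Csub (h z) (h w)) <= K1 * (K2 * D))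
      by (apply Rmult_le_compat; auto using Cnorm_pos).
    assert (Cnorm (Csub (g z) (g w)) * Cnorm (h w) <= (K1 * D) * K2)
      by (apply Rmult_le_compat; auto using Cnorm_pos).
    assert (0 <= K1 * K2 * D) by (repeat apply Rmult_le_pos; auto). nra.
Qed.

Lemma regular_on_Csum R0 (F F' : nat -> C -> C) K n : 0 <= K ->
  (forall j, (j < n)%nat -> regular_on R0 (F j) (F' j) K) ->
  regular_on R0 (fun z => Csum (fun j => F j z) n) (fun z => Csum (fun j => F' j z) n) (INR n * K).
Proof.
  intros HK H. unfold Csum.
  replace (INR n * K) with (INR (length (seq 0 n)) * K) by (rewrite length_seq; auto).
  assert (Hl : forall j, In j (seq 0 n) -> regular_on R0 (F j) (F' j) K)
    by (intros j Hj; apply in_seq in Hj; apply H; lia).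
  induction (seq 0 n) as [|a l IH]; cbn [fold_right length].
  - eapply regular_on_mono; [|apply (regular_on_const R0 C0)]. rewrite Cnorm_C0. simpl; lra.
  - rewrite S_INR. replace ((INR (length l) + 1) * K) with (K + INR (length l) * K) by ring.
    apply regular_on_add; [apply Hl; left; auto|].
    apply IH; intros; apply Hl; right; auto.
Qed.

(* Derivative of [z |-> det n (A z)] when the entries [A z] have derivatives [A' z]. *)
Fixpoint det_deriv (n : nat) (A A' : nat -> nat -> C) : C :=
  match n with
  | O => C0
  | S m => Csum (fun j => Cmul (sgn j) (Cadd (Cmul (A' 0%nat j) (det m (minor A 0 j)))
                                     (Cmul (A 0%nat j) (det_deriv m (minor A 0 j) (minor A' 0 j)))))
               (S m)
  end.

Fixpoint det_reg_const (n : nat) (K : R) : R :=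
  match n with
  | O => 1
  | S m => INR (S m) * (4 * K * det_reg_const m K)
  end.

Lemma det_reg_const_pos n K : 0 <= K -> 0 <= det_reg_const n K.
Proof.
  intros HK; induction n; cbn [det_reg_const]; [lra|].
  apply Rmult_le_pos; [apply pos_INR|]. nra.
Qed.

Lemma regular_on_det R0 n : forall (A A' : C -> nat -> nat -> C) K, 0 <= K ->
  (forall i j, (i < n)%nat -> (j < n)%nat ->
     regular_on R0 (fun z => A z i j) (fun z => A' z i j) K) ->
  regular_on R0 (fun z => det n (A z)) (fun z => det_deriv n (A z) (A' z)) (det_reg_const n K).
Proof.
  induction n as [|m IH]; intros A A' K HK H.
  - cbn [det det_deriv det_reg_const].
    eapply regular_on_mono; [|apply regular_on_const]. rewrite Cnorm_C1; lra.
  - cbn [det det_deriv det_reg_const].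
    apply (regular_on_Csum R0
      (fun j z => Cmul (sgn j) (Cmul (A z 0%nat j) (det m (minor (A z) 0 j))))).
    + pose proof (det_reg_const_pos m K HK). nra.
    + intros j Hj. rewrite <- (Rmult_1_l (4 * K * det_reg_const m K)), <- (Cnorm_sgn j).
      apply regular_on_scale.
      eapply regular_on_ext;
        [|apply (regular_on_mul R0 (fun z => A z 0%nat j) (fun z => A' z 0%nat j))].
      * intros z. reflexivity.
      * apply H; lia.
      * apply (IH (fun z => minor (A z) 0 j) (fun z => minor (A' z) 0 j) K HK).
        intros i k Hi Hk. unfold minor. apply H; apply skip_lt; auto.
Qed.

(** * The complex exponential *)

Lemma Rabs_le_inv a b : Rabs a <= b -> -b <= a <= b.
Proof.
  intros H. pose proof (Rle_abs a). pose proof (Rle_abs (-a)). rewrite Rabs_Ropp in H1. lra.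
Qed.

Lemma exp_le_mono a b : a <= b -> exp a <= exp b.
Proof. intros H; destruct (Req_dec a b); [subst; lra|]. left; apply exp_increasing; lra. Qed.

Lemma exp_small a : Rabs a <= 1/2 ->
  exp a <= 2 /\ Rabs (exp a - 1 - a) <= 2 * (a * a) /\ Rabs (exp a - 1) <= 2 * Rabs a.
Proof.
  intros Ha.
  assert (Hab : -(1/2) <= a <= 1/2) by (apply Rabs_le_inv in Ha; lra).
  pose proof (exp_ineq1_le a). pose proof (exp_ineq1_le (-a)).
  assert (E : exp a * exp (-a) = 1)
    by (rewrite <- exp_plus; replace (a + - a) with 0 by ring; apply exp_0).
  pose proof (exp_pos a). pose proof (exp_pos (-a)).
  assert (H3 : exp a * (1 - a) <= 1) by nra.
  assert (He2 : exp a <= 2) by nra.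
  assert (Hup : exp a - 1 - a <= 2 * (a * a)).
  { destruct (Rle_or_lt 0 a).
    - assert (exp a - 1 <= a * exp a) by nra. nra.
    - nra. }
  split; [auto|split].
  - rewrite Rabs_pos_eq; lra.
  - destruct (Rle_or_lt 0 a).
    + rewrite (Rabs_pos_eq a) by lra. rewrite Rabs_pos_eq by lra. nra.
    + rewrite (Rabs_left a) by lra. apply Rabs_le. split; nra.
Qed.

Lemma sin_approx_1 b : sin_approx b 1 = b - b^3/6.
Proof. unfold sin_approx, sin_term. simpl. field. Qed.
Lemma sin_approx_2 b : sin_approx b 2 = b - b^3/6 + b^5/120.
Proof. unfold sin_approx, sin_term. simpl. field. Qed.

Lemma sin_small_pos b : 0 <= b <= 1/2 -> b - b * b <= sin b <= b.
Proof.
  intros Hb. destruct (pre_sin_bound b 0) as [H1 H2]; try lra.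
  change (2 * 0 + 1)%nat with 1%nat in H1. change (2 * (0 + 1))%nat with 2%nat in H2.
  rewrite sin_approx_1 in H1. rewrite sin_approx_2 in H2.
  assert (b^3 <= b * b) by (simpl; nra). assert (b^5 <= b^3) by (simpl; nra).
  assert (0 <= b^5) by (apply pow_le; lra).
  split; lra.
Qed.

Lemma sin_small b : Rabs b <= 1/2 -> Rabs (sin b - b) <= b * b /\ Rabs (sin b) <= Rabs b.
Proof.
  intros Hb. apply Rabs_le_inv in Hb.
  destruct (Rle_or_lt 0 b).
  - pose proof (sin_small_pos b ltac:(lra)).
    split; [apply Rabs_le; split; nra|]. rewrite (Rabs_pos_eq b) by lra. apply Rabs_le; nra.
  - pose proof (sin_small_pos (-b) ltac:(lra)). rewrite sin_neg in H0.
    split; [apply Rabs_le; split; nra|]. rewrite (Rabs_left b) by lra. apply Rabs_le; nra.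
Qed.

Lemma cos_small b : Rabs b <= 1/2 -> Rabs (cos b - 1) <= b * b.
Proof.
  intros Hb. replace b with (2 * (b/2)) at 1 by field. rewrite cos_2a_sin.
  destruct (sin_small (b/2)) as [_ H]. { apply Rabs_le_inv in Hb; apply Rabs_le; lra. }
  assert (Rabs (sin (b/2)) * Rabs (sin (b/2)) <= Rabs (b/2) * Rabs (b/2)).
  { apply Rmult_le_compat; auto using Rabs_pos. }
  rewrite <- !Rabs_mult in H0. rewrite !Rabs_pos_eq in H0 by nra.
  replace (1 - 2 * sin (b / 2) * sin (b / 2) - 1) with (- (2 * (sin (b/2) * sin (b/2)))) by ring.
  rewrite Rabs_Ropp. rewrite Rabs_pos_eq by nra. nra.
Qed.

Definition cexp (a : C) : C := (exp (fst a) * cos (snd a), exp (fst a) * sin (snd a)).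

Lemma cexp_add a b : cexp (Cadd a b) = Cmul (cexp a) (cexp b).
Proof.
  unfold cexp, Cadd, Cmul; simpl. rewrite exp_plus, cos_plus, sin_plus. apply Cext; simpl; ring.
Qed.

Lemma Cnorm_cexp a : Cnorm (cexp a) = exp (fst a).
Proof.
  unfold Cnorm, cexp; simpl. pose proof (sin2_cos2 (snd a)). unfold Rsqr in H.
  replace (exp (fst a) * cos (snd a) * (exp (fst a) * cos (snd a)) +
   exp (fst a) * sin (snd a) * (exp (fst a) * sin (snd a))) with (exp (fst a) * exp (fst a))
   by (transitivity (exp (fst a) * exp (fst a)
                     * (sin (snd a) * sin (snd a) + cos (snd a) * cos (snd a)));
       [rewrite H; ring|ring]).
  apply sqrt_square. left; apply exp_pos.
Qed.

Lemma cexp_estimates_small z : Cnorm z <= 1/2 ->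
  Cnorm (Csub (cexp z) C1) <= 5 * Cnorm z /\
  Cnorm (Csub (Csub (cexp z) C1) z) <= 5 * (Cnorm z * Cnorm z).
Proof.
  intros Hs. pose proof (Cnorm_pos z) as Hn.
  pose proof (Cnorm_fst z); pose proof (Cnorm_snd z).
  destruct z as [a b]; simpl in *.
  destruct (exp_small a) as [E1 [E2 E3]]; [lra|].
  destruct (sin_small b) as [S1 S2]; [lra|].
  pose proof (cos_small b ltac:(lra)) as C2.
  pose proof (Cnorm_sqr (a, b)) as Hsq; simpl in Hsq.
  pose proof (Rabs_pos a); pose proof (Rabs_pos b).
  pose proof (exp_pos a).
  pose proof (COS_bound b). pose proof (SIN_bound b).
  assert (Hbb : b * b = Rabs b * Rabs b)
    by (rewrite <- Rabs_mult; symmetry; apply Rabs_pos_eq; nra).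
  split.
  - eapply Rle_trans; [apply Cnorm_le_l1|]. unfold cexp, Csub, Cadd, Copp, C1; simpl.
    replace (exp a * cos b + Ropp 1) with ((exp a - 1) * cos b + (cos b - 1)) by ring.
    replace (exp a * sin b + Ropp 0) with (exp a * sin b) by ring.
    assert (Rabs ((exp a - 1) * cos b) <= 2 * Rabs a).
    { rewrite Rabs_mult. assert (Rabs (cos b) <= 1) by (apply Rabs_le; lra).
      pose proof (Rabs_pos (cos b)). nra. }
    assert (Rabs (exp a * sin b) <= 2 * Rabs b).
    { rewrite Rabs_mult, (Rabs_pos_eq (exp a)) by lra. pose proof (Rabs_pos (sin b)). nra. }
    pose proof (Rabs_triang ((exp a - 1) * cos b) (cos b - 1)).
    assert (b * b <= Rabs b) by nra.
    lra.
  - eapply Rle_trans; [apply Cnorm_le_l1|]. unfold cexp, Csub, Cadd, Copp, C1; simpl.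
    replace (exp a * cos b + Ropp 1 + - a) with ((exp a - 1 - a) + exp a * (cos b - 1)) by ring.
    replace (exp a * sin b + Ropp 0 + - b) with ((exp a - 1) * sin b + (sin b - b)) by ring.
    pose proof (Rabs_triang (exp a - 1 - a) (exp a * (cos b - 1))).
    pose proof (Rabs_triang ((exp a - 1) * sin b) (sin b - b)).
    assert (Rabs (exp a * (cos b - 1)) <= 2 * (b * b)).
    { rewrite Rabs_mult, (Rabs_pos_eq (exp a)) by lra. pose proof (Rabs_pos (cos b - 1)). nra. }
    assert (Rabs ((exp a - 1) * sin b) <= 2 * Rabs a * Rabs b).
    { rewrite Rabs_mult. pose proof (Rabs_pos (sin b)). pose proof (Rabs_pos (exp a - 1)). nra. }
    assert (2 * Rabs a * Rabs b <= a * a + b * b).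
    { pose proof (Rle_0_sqr (Rabs a - Rabs b)) as Hab. unfold Rsqr in Hab.
      assert (Rabs a * Rabs a = a * a) by (rewrite <- Rabs_mult; apply Rabs_pos_eq; nra).
      nra. }
    assert (0 <= a * a) by nra. assert (0 <= b * b) by nra.
    nra.
Qed.

(* [5] serves [|z| <= 1/2]; the other terms absorb crude bounds for [1/2 < |z| <= rho]. *)
Definition cexp_const (rho : R) : R := 5 + 4 * (exp rho + 1 + rho).

Lemma cexp_const_pos rho : 0 <= rho -> 0 <= cexp_const rho.
Proof. intros. unfold cexp_const. pose proof (exp_pos rho). lra. Qed.

Lemma cexp_estimates rho z : Cnorm z <= rho ->
  Cnorm (Csub (cexp z) C1) <= cexp_const rho * Cnorm z /\
  Cnorm (Csub (Csub (cexp z) C1) z) <= cexp_const rho * (Cnorm z * Cnorm z).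
Proof.
  intros Hz. pose proof (Cnorm_pos z) as Hn. pose proof (exp_pos rho).
  assert (Hcc : 5 <= cexp_const rho) by (unfold cexp_const; lra).
  destruct (Rle_or_lt (Cnorm z) (1/2)) as [Hs|Hl].
  - destruct (cexp_estimates_small z Hs) as [E1 E2].
    split; eapply Rle_trans; eauto; apply Rmult_le_compat_r; nra.
  - assert (Hce : Cnorm (cexp z) <= exp rho).
    { rewrite Cnorm_cexp. apply exp_le_mono. pose proof (Cnorm_fst z) as Hf.
      apply Rabs_le_inv in Hf. lra. }
    split.
    + eapply Rle_trans; [apply Cnorm_sub_le|]. rewrite Cnorm_C1.
      assert (cexp_const rho * (1/2) <= cexp_const rho * Cnorm z)
        by (apply Rmult_le_compat_l; lra).
      unfold cexp_const in *; lra.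
    + eapply Rle_trans; [apply Cnorm_sub_le|].
      eapply Rle_trans; [apply Rplus_le_compat_r; apply Cnorm_sub_le|]. rewrite Cnorm_C1.
      assert (1/4 <= Cnorm z * Cnorm z) by nra.
      assert (cexp_const rho * (1/4) <= cexp_const rho * (Cnorm z * Cnorm z))
        by (apply Rmult_le_compat_l; lra).
      unfold cexp_const in *; lra.
Qed.

Definition ezt (t : R) (z : C) : C :=
  (exp (fst z * t) * cos (snd z * t), exp (fst z * t) * sin (snd z * t)).

Lemma ezt_cexp t z : ezt t z = cexp (Cmul z (RtoC t)).
Proof.
  unfold ezt, cexp, Cmul, RtoC; simpl.
  replace (fst z * t - snd z * 0) with (fst z * t) by ring.
  replace (fst z * 0 + snd z * t) with (snd z * t) by ring. reflexivity.
Qed.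

Lemma ezt_shift t z w : ezt t z = Cmul (ezt t w) (cexp (Cmul (Csub z w) (RtoC t))).
Proof.
  rewrite !ezt_cexp, <- cexp_add. f_equal. Cring.
Qed.

Lemma Cnorm_ezt t z : Cnorm (ezt t z) = exp (fst z * t).
Proof. rewrite ezt_cexp, Cnorm_cexp. unfold Cmul, RtoC; simpl. f_equal; ring. Qed.

Lemma ezt_bound tau R0 t z : 0 <= tau -> -tau <= t <= 0 -> Cnorm z <= R0 ->
  Cnorm (ezt t z) <= exp (R0 * tau).
Proof.
  intros Ht Ht2 Hz. rewrite Cnorm_ezt. apply exp_le_mono.
  pose proof (Cnorm_fst z). pose proof (Rle_abs (fst z * t)). rewrite Rabs_mult in H0.
  rewrite (Rabs_left1 t) in H0 by lra. pose proof (Rabs_pos (fst z)). nra.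
Qed.

Lemma ezt_bound_right t z : t <= 0 -> 0 <= fst z -> Cnorm (ezt t z) <= 1.
Proof.
  intros. rewrite Cnorm_ezt. rewrite <- exp_0. apply exp_le_mono. nra.
Qed.

Lemma Cnorm_mul_RtoC_le tau t a : -tau <= t <= 0 -> Cnorm (Cmul a (RtoC t)) <= Cnorm a * tau.
Proof.
  intros Ht. rewrite Cnorm_mult, Cnorm_RtoC. rewrite Rabs_left1 by lra.
  apply Rmult_le_compat_l; [apply Cnorm_pos|lra].
Qed.

Lemma ezt_lipschitz tau R0 t z w : 0 <= tau -> -tau <= t <= 0 -> Cnorm z <= R0 -> Cnorm w <= R0 ->
  Cnorm (Csub (ezt t z) (ezt t w))
  <= exp (R0 * tau) * cexp_const (2 * R0 * tau) * tau * Cnorm (Csub z w).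
Proof.
  intros Htau Ht Hz Hw.
  rewrite (ezt_shift t z w).
  replace (Csub (Cmul (ezt t w) (cexp (Cmul (Csub z w) (RtoC t)))) (ezt t w))
    with (Cmul (ezt t w) (Csub (cexp (Cmul (Csub z w) (RtoC t))) C1)) by Cring.
  rewrite Cnorm_mult.
  pose proof (Cnorm_mul_RtoC_le tau t (Csub z w) Ht) as Hs.
  assert (Hd : Cnorm (Csub z w) <= 2 * R0) by (pose proof (Cnorm_sub_le z w); lra).
  assert (Hr : Cnorm (Cmul (Csub z w) (RtoC t)) <= 2 * R0 * tau) by nra.
  destruct (cexp_estimates _ _ Hr) as [E1 _].
  pose proof (ezt_bound tau R0 t w Htau Ht Hw).
  assert (0 <= cexp_const (2 * R0 * tau))
    by (apply cexp_const_pos; pose proof (Cnorm_pos z); nra).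
  apply Rle_trans with (exp (R0 * tau) * (cexp_const (2 * R0 * tau) * (Cnorm (Csub z w) * tau))).
  - apply Rmult_le_compat; auto using Cnorm_pos.
    eapply Rle_trans; [apply E1|]. apply Rmult_le_compat_l; auto.
  - lra.
Qed.

Lemma ezt_taylor_remainder tau R0 t z w u : 0 <= tau -> -tau <= t <= 0 ->
  Cnorm z <= R0 -> Cnorm w <= R0 -> Cnorm u <= R0 ->
  Cnorm (Csub (Csub (ezt t z) (ezt t w)) (Cmul (Cmul (RtoC t) (ezt t u)) (Csub z w)))
  <= 2 * exp (R0 * tau) * cexp_const (2 * R0 * tau) * (tau * tau)
     * (Cnorm (Csub z w) * (Cnorm (Csub z u) + Cnorm (Csub w u))).
Proof.
  intros Htau Ht Hz Hw Hu.
  set (e := exp (R0 * tau)). set (k := cexp_const (2 * R0 * tau)).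
  assert (Hk : 0 <= k) by (apply cexp_const_pos; pose proof (Cnorm_pos z); nra).
  assert (He : 0 <= e) by (unfold e; left; apply exp_pos).
  rewrite (ezt_shift t z w).
  set (Y := cexp (Cmul (Csub z w) (RtoC t))).
  replace (Csub (Csub (Cmul (ezt t w) Y) (ezt t w)) (Cmul (Cmul (RtoC t) (ezt t u)) (Csub z w)))
    with (Cadd (Cmul (ezt t w) (Csub (Csub Y C1) (Cmul (Csub z w) (RtoC t))))
               (Cmul (Cmul (RtoC t) (Csub (ezt t w) (ezt t u))) (Csub z w))) by (unfold Y; Cring).
  eapply Rle_trans; [apply Cnorm_triang|]. rewrite !Cnorm_mult, Cnorm_RtoC, (Rabs_left1 t) by lra.
  pose proof (Cnorm_mul_RtoC_le tau t (Csub z w) Ht) as Hs.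
  assert (Hd : Cnorm (Csub z w) <= 2 * R0) by (pose proof (Cnorm_sub_le z w); lra).
  assert (Hr : Cnorm (Cmul (Csub z w) (RtoC t)) <= 2 * R0 * tau) by nra.
  destruct (cexp_estimates _ _ Hr) as [_ E2]. fold Y k in E2.
  pose proof (ezt_bound tau R0 t w Htau Ht Hw). fold e in H.
  pose proof (ezt_lipschitz tau R0 t w u Htau Ht Hw Hu). fold e k in H0.
  set (D := Cnorm (Csub z w)). set (a := Cnorm (Csub z u)). set (b := Cnorm (Csub w u)).
  fold D in Hs, E2.
  assert (0 <= D) by apply Cnorm_pos. assert (0 <= a) by apply Cnorm_pos.
  assert (0 <= b) by apply Cnorm_pos.
  assert (HD : D <= a + b).
  { unfold D, a, b. pose proof (Cnorm_dist_triang z u w). rewrite (Cnorm_sub_sym u w) in H4. lra. }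
  set (Z := Cnorm (Cmul (Csub z w) (RtoC t))) in *.
  assert (0 <= Z) by apply Cnorm_pos.
  assert (T1 : Cnorm (ezt t w) * Cnorm (Csub (Csub Y C1) (Cmul (Csub z w) (RtoC t)))
               <= e * (k * ((D * tau) * (D * tau)))).
  { apply Rmult_le_compat; auto using Cnorm_pos. eapply Rle_trans; [apply E2|].
    apply Rmult_le_compat_l; auto. apply Rmult_le_compat; auto. }
  assert (T2 : - t * Cnorm (Csub (ezt t w) (ezt t u)) * D <= tau * (e * k * tau * b) * D).
  { apply Rmult_le_compat_r; auto. apply Rmult_le_compat; try lra; auto using Cnorm_pos. }
  assert (X1 : e * (k * ((D * tau) * (D * tau))) = (e * k * (tau * tau)) * (D * D)) by ring.
  assert (X2 : tau * (e * k * tau * b) * D = (e * k * (tau * tau)) * (D * b)) by ring.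
  assert (P : 0 <= e * k * (tau * tau)) by (apply Rmult_le_pos; [apply Rmult_le_pos|]; nra).
  assert (D * D + D * b <= 2 * (D * (a + b))) by nra.
  assert ((e * k * (tau * tau)) * (D * D + D * b) <= (e * k * (tau * tau)) * (2 * (D * (a + b))))
    by (apply Rmult_le_compat_l; auto).
  lra.
Qed.

(** * The operator [L] extended to complex exponentials *)

Section ComplexifiedOperator.
Variables (tau : R) (N : nat) (L : (R -> nat -> R) -> nat -> R) (M : R).
Hypothesis Htau : 0 <= tau.
Hypothesis L_add : forall phi psi, cont_on tau N phi -> cont_on tau N psi ->
  forall i, (i < N)%nat -> L (fun t k => phi t k + psi t k) i = L phi i + L psi i.
Hypothesis L_scal : forall c phi, cont_on tau N phi ->
  forall i, (i < N)%nat -> L (fun t k => c * phi t k) i = c * L phi i.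
Hypothesis L_bounded : forall phi B, cont_on tau N phi ->
  (forall t k, -tau <= t <= 0 -> (k < N)%nat -> Rabs (phi t k) <= B) ->
  forall i, (i < N)%nat -> Rabs (L phi i) <= M * B.

Definition wrap (j : nat) (g : R -> R) : R -> nat -> R := fun t k => if Nat.eqb k j then g t else 0.

Lemma cont_wrap j g : continuity g -> cont_on tau N (wrap j g).
Proof.
  intros Hg k Hk t Ht e He. unfold wrap. destruct (Nat.eqb k j).
  - destruct (Hg t e He) as [d [Hd H]]. exists d; split; auto.
    intros s Hs Hst. destruct (Req_dec s t).
    + subst. rewrite Rminus_diag, Rabs_R0. lra.
    + apply (H s). split; [split; [constructor|auto]|auto].
  - exists 1. split; [lra|]. intros. rewrite Rminus_diag, Rabs_R0. lra.
Qed.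

Lemma cont_scal c f : cont_on tau N f -> cont_on tau N (fun t k => c * f t k).
Proof.
  intros Hf k Hk t Ht e He.
  destruct (Hf k Hk t Ht (e / (Rabs c + 1))) as [d [Hd H]].
  { apply Rdiv_lt_0_compat; auto. pose proof (Rabs_pos c); lra. }
  exists d. split; auto. intros s Hs Hst. specialize (H s Hs Hst).
  replace (c * f s k - c * f t k) with (c * (f s k - f t k)) by ring.
  rewrite Rabs_mult. pose proof (Rabs_pos c). pose proof (Rabs_pos (f s k - f t k)).
  assert (Rabs c * Rabs (f s k - f t k) <= Rabs c * (e / (Rabs c + 1)))
    by (apply Rmult_le_compat_l; lra).
  assert (Rabs c * (e / (Rabs c + 1)) < e).
  { apply Rmult_lt_reg_r with (Rabs c + 1); [lra|].
    replace (Rabs c * (e / (Rabs c + 1)) * (Rabs c + 1)) with (Rabs c * e) by (field; lra). nra. }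
  lra.
Qed.

Lemma L_wrap_comb j i a b g h : (i < N)%nat -> continuity g -> continuity h ->
  L (wrap j (fun t => a * g t + b * h t)) i = a * L (wrap j g) i + b * L (wrap j h) i.
Proof.
  intros Hi Hg Hh.
  replace (wrap j (fun t => a * g t + b * h t))
    with (fun t k => a * wrap j g t k + b * wrap j h t k).
  - rewrite L_add, !L_scal; auto using cont_wrap, cont_scal.
  - apply functional_extensionality; intro t. apply functional_extensionality; intro k.
    unfold wrap. destruct (Nat.eqb k j); ring.
Qed.

(* Complex-linear extension of [L], applied to [t |-> G t e_j] and read off in component [i]. *)
Definition Lc (j i : nat) (G : R -> C) : C :=
  (L (wrap j (fun t => fst (G t))) i, L (wrap j (fun t => snd (G t))) i).

Definition Ccont (G : R -> C) : Prop :=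
  continuity (fun t => fst (G t)) /\ continuity (fun t => snd (G t)).

Lemma Lc_sub j i G1 G2 : (i < N)%nat -> Ccont G1 -> Ccont G2 ->
  Lc j i (fun t => Csub (G1 t) (G2 t)) = Csub (Lc j i G1) (Lc j i G2).
Proof.
  intros Hi [A1 B1] [A2 B2]. unfold Lc, Csub, Cadd, Copp; simpl.
  replace (fun t => fst (G1 t) + - fst (G2 t)) with (fun t => 1 * fst (G1 t) + -1 * fst (G2 t))
    by (apply functional_extensionality; intro; ring).
  replace (fun t => snd (G1 t) + - snd (G2 t)) with (fun t => 1 * snd (G1 t) + -1 * snd (G2 t))
    by (apply functional_extensionality; intro; ring).
  rewrite !L_wrap_comb by auto. apply Cext; simpl; ring.
Qed.

Lemma Lc_mul_const j i G c : (i < N)%nat -> Ccont G ->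
  Lc j i (fun t => Cmul (G t) c) = Cmul (Lc j i G) c.
Proof.
  intros Hi [A B]. unfold Lc, Cmul; simpl.
  replace (fun t => fst (G t) * fst c - snd (G t) * snd c)
    with (fun t => fst c * fst (G t) + - snd c * snd (G t))
    by (apply functional_extensionality; intro; ring).
  replace (fun t => fst (G t) * snd c + snd (G t) * fst c)
    with (fun t => snd c * fst (G t) + fst c * snd (G t))
    by (apply functional_extensionality; intro; ring).
  rewrite !L_wrap_comb by auto. apply Cext; simpl; ring.
Qed.

Lemma Lc_bound j i G b : (i < N)%nat -> Ccont G -> 0 <= b ->
  (forall t, -tau <= t <= 0 -> Cnorm (G t) <= b) -> Cnorm (Lc j i G) <= 2 * Rabs M * b.
Proof.
  intros Hi [A B] Hb HG.
  assert (X : forall g, continuity g -> (forall t, -tau <= t <= 0 -> Rabs (g t) <= b) ->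
            Rabs (L (wrap j g) i) <= Rabs M * b).
  { intros g Hg Hgb. eapply Rle_trans; [apply (L_bounded _ b); auto|].
    - apply cont_wrap; auto.
    - intros t k Ht Hk. unfold wrap. destruct (Nat.eqb k j); auto. rewrite Rabs_R0; auto.
    - apply Rmult_le_compat_r; auto. apply Rle_abs. }
  eapply Rle_trans; [apply Cnorm_le_l1|]. unfold Lc; simpl.
  assert (Rabs (L (wrap j (fun t => fst (G t))) i) <= Rabs M * b).
  { apply X; auto. intros t Ht. eapply Rle_trans; [apply Cnorm_fst|]. auto. }
  assert (Rabs (L (wrap j (fun t => snd (G t))) i) <= Rabs M * b).
  { apply X; auto. intros t Ht. eapply Rle_trans; [apply Cnorm_snd|]. auto. }
  lra.
Qed.

Lemma Lexp_Lc z i j : Lexp L z i j = Lc j i (fun t => ezt t z).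
Proof. reflexivity. Qed.

Definition Lder (z : C) (i j : nat) : C := Lc j i (fun t => Cmul (RtoC t) (ezt t z)).

Lemma Ccont_ezt z : Ccont (fun t => ezt t z).
Proof. unfold Ccont, ezt; simpl; split; reg. Qed.

Lemma Ccont_t_ezt z : Ccont (fun t => Cmul (RtoC t) (ezt t z)).
Proof. unfold Ccont, ezt, Cmul, RtoC; simpl; split; reg. Qed.

Lemma Ccont_ezt_sub z w : Ccont (fun t => Csub (ezt t z) (ezt t w)).
Proof. unfold Ccont, ezt, Csub, Cadd, Copp; simpl; split; reg. Qed.

Lemma Lexp_bound_right z i j : (i < N)%nat -> 0 <= fst z -> Cnorm (Lexp L z i j) <= 2 * Rabs M.
Proof.
  intros Hi Hz. rewrite Lexp_Lc, <- (Rmult_1_r (2 * Rabs M)).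
  apply Lc_bound; auto using Ccont_ezt; [lra|]. intros t Ht. apply ezt_bound_right; lra.
Qed.

Section Ball.
Variable R0 : R.
Hypothesis HR0 : 0 <= R0.

Let e := exp (R0 * tau).
Let k := cexp_const (2 * R0 * tau).

Lemma Lexp_ball_bounds i j : (i < N)%nat -> forall z, Cnorm z <= R0 ->
  Cnorm (Lexp L z i j) <= 2 * Rabs M * e /\ Cnorm (Lder z i j) <= 2 * Rabs M * (tau * e).
Proof.
  intros Hi z Hz. assert (He : 0 < e) by apply exp_pos. split.
  - rewrite Lexp_Lc. apply Lc_bound; auto using Ccont_ezt; [lra|].
    intros t Ht. apply (ezt_bound tau R0 t z); auto.
  - apply Lc_bound; auto using Ccont_t_ezt; [nra|]. intros t Ht.
    rewrite Cnorm_mult, Cnorm_RtoC, Rabs_left1 by lra.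
    pose proof (ezt_bound tau R0 t z Htau Ht Hz).
    apply Rmult_le_compat; try lra; auto using Cnorm_pos.
Qed.

Lemma Lexp_lipschitz i j : (i < N)%nat -> forall z w, Cnorm z <= R0 -> Cnorm w <= R0 ->
  Cnorm (Csub (Lexp L z i j) (Lexp L w i j)) <= 2 * Rabs M * (e * k * tau * Cnorm (Csub z w)).
Proof.
  intros Hi z w Hz Hw. rewrite !Lexp_Lc, <- Lc_sub by auto using Ccont_ezt.
  apply Lc_bound; auto using Ccont_ezt_sub.
  - assert (0 <= e) by (left; apply exp_pos).
    assert (0 <= k) by (apply cexp_const_pos; nra).
    pose proof (Cnorm_pos (Csub z w)).
    repeat apply Rmult_le_pos; auto.
  - intros t Ht. apply (ezt_lipschitz tau R0 t z w); auto.
Qed.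

Lemma Lexp_taylor_remainder i j : (i < N)%nat -> forall z w u,
  Cnorm z <= R0 -> Cnorm w <= R0 -> Cnorm u <= R0 ->
  Cnorm (Csub (Csub (Lexp L z i j) (Lexp L w i j)) (Cmul (Lder u i j) (Csub z w)))
  <= 2 * Rabs M * (2 * e * k * (tau * tau)
                   * (Cnorm (Csub z w) * (Cnorm (Csub z u) + Cnorm (Csub w u)))).
Proof.
  intros Hi z w u Hz Hw Hu. unfold Lder.
  rewrite !Lexp_Lc, <- Lc_sub, <- Lc_mul_const, <- Lc_sub
    by (auto using Ccont_ezt, Ccont_t_ezt, Ccont_ezt_sub;
        unfold Ccont, ezt, Csub, Cadd, Copp, Cmul, RtoC; simpl; split; reg).
  apply Lc_bound; auto.
  - unfold Ccont, ezt, Csub, Cadd, Copp, Cmul, RtoC; simpl; split; reg.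
  - assert (0 <= e) by (left; apply exp_pos).
    assert (0 <= k) by (apply cexp_const_pos; nra).
    pose proof (Cnorm_pos (Csub z w)); pose proof (Cnorm_pos (Csub z u));
      pose proof (Cnorm_pos (Csub w u)).
    apply Rmult_le_pos; [|nra]. apply Rmult_le_pos; [|nra]. nra.
  - intros t Ht. apply (ezt_taylor_remainder tau R0 t z w u); auto.
Qed.

Definition Lexp_reg_const : R :=
  2 * Rabs M * (e * (1 + tau) + e * k * tau + 2 * e * k * (tau * tau)).

Lemma Lexp_regular i j : (i < N)%nat ->
  regular_on R0 (fun z => Lexp L z i j) (fun z => Lder z i j) Lexp_reg_const.
Proof.
  intros Hi. unfold Lexp_reg_const.
  assert (He : 0 < e) by apply exp_pos.
  assert (Hk : 0 <= k) by (apply cexp_const_pos; nra).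
  set (KE := e * (1 + tau) + e * k * tau + 2 * e * k * (tau * tau)).
  assert (P1 : 0 <= e * k * tau) by (apply Rmult_le_pos; [apply Rmult_le_pos|]; lra).
  assert (P2 : 0 <= 2 * e * k * (tau * tau)) by nra.
  assert (HM : 0 <= 2 * Rabs M) by (pose proof (Rabs_pos M); lra).
  pose proof (Lexp_ball_bounds i j Hi) as Hb.
  repeat split.
  - apply Rmult_le_pos; unfold KE; nra.
  - intros z Hz. eapply Rle_trans; [apply Hb; auto|].
    apply Rmult_le_compat_l; unfold KE; nra.
  - intros z Hz. eapply Rle_trans; [apply Hb; auto|].
    apply Rmult_le_compat_l; unfold KE; nra.
  - intros z w Hz Hw. eapply Rle_trans; [apply Lexp_lipschitz; auto|].
    rewrite (Rmult_assoc (2 * Rabs M) KE). apply Rmult_le_compat_l; auto.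
    apply Rmult_le_compat_r; [apply Cnorm_pos|unfold KE; nra].
  - intros z w u Hz Hw Hu. eapply Rle_trans; [apply Lexp_taylor_remainder; auto|].
    rewrite (Rmult_assoc (2 * Rabs M) KE). apply Rmult_le_compat_l; auto.
    pose proof (Cnorm_pos (Csub z w)); pose proof (Cnorm_pos (Csub z u));
      pose proof (Cnorm_pos (Csub w u)).
    apply Rmult_le_compat_r; [nra|unfold KE; nra].
Qed.

End Ball.
End ComplexifiedOperator.

(** * The characteristic function *)

Definition Delta_deriv (L : (R -> nat -> R) -> nat -> R) (eps : R) (z : C) (i j : nat) : C :=
  Cadd (if Nat.eqb i j then Csub (Cmul (RtoC (2 * (eps * eps))) z) C1 else C0) (Lder L z i j).

Lemma Delta_regular tau N L R0 : 0 <= tau -> bounded_linear_op tau N L -> 0 <= R0 ->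
  exists K, 0 <= K /\ forall eps i j, 0 <= eps <= 1 -> (i < N)%nat ->
    regular_on R0 (fun z => Delta L eps z i j) (fun z => Delta_deriv L eps z i j) K.
Proof.
  intros Ht [L_add [L_scal [M L_bounded]]] HR.
  set (KL := Lexp_reg_const tau M R0).
  assert (HKL : 0 <= KL \/ N = 0%nat).
  { destruct N; [right; auto|left].
    destruct (Lexp_regular tau (S N) L M Ht L_add L_scal L_bounded R0 HR 0 0 ltac:(lia)) as [X _].
    exact X. }
  set (K1 := 4 * (R0 + 1) * (R0 + 1) + (R0 + 1)).
  exists (K1 + Rabs KL). split; [unfold K1; pose proof (Rabs_pos KL); nra|].
  intros eps i j He Hi.
  rewrite (Rabs_pos_eq KL) by (destruct HKL; [auto|lia]).
  apply regular_on_add; [|exact (Lexp_regular tau N L M Ht L_add L_scal L_bounded R0 HR i j Hi)].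
  destruct (Nat.eqb i j).
  - apply regular_on_add; [|apply regular_on_opp, regular_on_id; auto].
    apply (regular_on_ext _ _ (fun z => Cmul (RtoC (eps * eps)) (Cadd (Cmul C1 z) (Cmul z C1))));
      [intros z; Cring|].
    apply regular_on_mono with (Cnorm (RtoC (eps * eps)) * (4 * (R0 + 1) * (R0 + 1))).
    { rewrite Cnorm_RtoC, Rabs_pos_eq by nra.
      assert (0 <= 4 * (R0 + 1) * (R0 + 1)) by nra.
      assert (eps * eps <= 1) by nra. nra. }
    apply regular_on_scale, regular_on_mul; apply regular_on_id; auto.
  - apply regular_on_mono with (Cnorm C0); [rewrite Cnorm_C0; unfold K1; nra|].
    apply regular_on_const.
Qed.

Lemma charfun_regular tau N L R0 : 0 <= tau -> bounded_linear_op tau N L -> 0 <= R0 ->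
  exists D, 0 <= D /\ forall eps, 0 <= eps <= 1 ->
    regular_on R0 (charfun L N eps)
      (fun z => det_deriv N (Delta L eps z) (Delta_deriv L eps z)) D.
Proof.
  intros Ht HL HR. destruct (Delta_regular tau N L R0 Ht HL HR) as [K [HK H]].
  exists (det_reg_const N K). split; [apply det_reg_const_pos; auto|]. intros eps He.
  apply (regular_on_det R0 N (fun z => Delta L eps z) (fun z => Delta_deriv L eps z) K HK).
  intros i j Hi Hj. apply H; auto.
Qed.

(* [Delta_eps - Delta_0 = eps^2 z^2 I]. *)
Lemma charfun_perturbation tau N L R0 : 0 <= tau -> bounded_linear_op tau N L -> 0 <= R0 ->
  exists Cp, 0 <= Cp /\ forall eps z, 0 <= eps <= 1 -> Cnorm z <= R0 ->
    Cnorm (Csub (charfun L N eps z) (charfun L N 0 z)) <= Cp * (eps * eps).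
Proof.
  intros Ht HL HR. destruct (Delta_regular tau N L R0 Ht HL HR) as [K [HK H]].
  exists (det_lip N K * (R0 * R0)).
  split; [apply Rmult_le_pos; [apply det_lip_pos; auto|nra]|].
  intros eps z He Hz.
  replace (det_lip N K * (R0 * R0) * (eps * eps))
    with (det_lip N K * (eps * eps * (R0 * R0))) by ring.
  unfold charfun. apply det_lipschitz; auto.
  intros i j Hi Hj.
  split; [apply H; auto|split; [apply H; auto; lra|]].
  unfold Delta. destruct (Nat.eqb i j).
  - replace (Csub (Cadd (Csub (Cmul (RtoC (eps * eps)) (Cmul z z)) z) (Lexp L z i j))
        (Cadd (Csub (Cmul (RtoC (0 * 0)) (Cmul z z)) z) (Lexp L z i j)))
      with (Cmul (RtoC (eps * eps)) (Cmul z z)) by Cring.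
    rewrite !Cnorm_mult, Cnorm_RtoC, Rabs_pos_eq by nra.
    pose proof (Cnorm_pos z).
    apply Rmult_le_compat_l; [nra|]. apply Rmult_le_compat; auto.
  - replace (Csub (Cadd C0 (Lexp L z i j)) (Cadd C0 (Lexp L z i j))) with C0 by Cring.
    rewrite Cnorm_C0. pose proof (Cnorm_pos z). nra.
Qed.

(* In the half-plane [Re z >= 0] the entries of [L(e^{z.} I)] stay bounded, while the diagonal
   [eps^2 z^2 - z] has modulus at least [|z|/2] as long as [eps^2 Re z <= 1/2]. *)
Lemma charfun_large tau N L : 0 <= tau -> bounded_linear_op tau N L ->
  exists Y0, 0 < Y0 /\ forall eps z, 0 <= fst z -> eps * eps * fst z <= 1/2 -> Y0 <= Cnorm z ->
    charfun L N eps z <> C0.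
Proof.
  intros Ht [L_add [L_scal [M L_bounded]]].
  destruct (det_shift_lower_bound N (2 * Rabs M) ltac:(pose proof (Rabs_pos M); lra))
    as [c [T [Hc HT]]].
  exists (2 * Rabs T + 1). split; [pose proof (Rabs_pos T); lra|].
  intros eps z Hx He Hz Hcf.
  set (mu := Csub (Cmul (RtoC (eps * eps)) (Cmul z z)) z).
  assert (Hmu : Cnorm z / 2 <= Cnorm mu).
  { replace mu with (Cmul z (Csub (Cmul (RtoC (eps * eps)) z) C1)) by (unfold mu; Cring).
    rewrite Cnorm_mult. pose proof (Cnorm_fst (Csub (Cmul (RtoC (eps * eps)) z) C1)) as Hf.
    replace (fst (Csub (Cmul (RtoC (eps * eps)) z) C1)) with (- (1 - eps * eps * fst z)) in Hf
      by (unfold Csub, Cadd, Copp, Cmul, RtoC, C1; simpl; ring).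
    rewrite Rabs_Ropp, Rabs_pos_eq in Hf by lra. pose proof (Cnorm_pos z). nra. }
  assert (HT2 : T <= Cnorm mu) by (pose proof (Rle_abs T); lra).
  specialize (HT mu (fun i j => Lexp L z i j) HT2).
  assert (HB : forall i j, (i < N)%nat -> (j < N)%nat -> Cnorm (Lexp L z i j) <= 2 * Rabs M)
    by (intros; apply (Lexp_bound_right tau N L M); auto).
  specialize (HT HB).
  change (det N (shift_diag mu (fun i j => Lexp L z i j))) with (charfun L N eps z) in HT.
  rewrite Hcf, Cnorm_C0 in HT.
  assert (0 < Cnorm mu) by (pose proof (Rabs_pos T); lra).
  pose proof (pow_lt (Cnorm mu) N H). nra.
Qed.

(** * Compactness *)

Definition cluster_point (z : nat -> C) (zs : C) : Prop :=
  forall eta, 0 < eta -> forall N0, exists n, (N0 <= n)%nat /\ Cnorm (Csub (z n) zs) < eta.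

Lemma ValAdh_close (u : nat -> R) l : ValAdh u l ->
  forall e, 0 < e -> forall N0, exists p, (N0 <= p)%nat /\ Rabs (u p - l) < e.
Proof.
  intros H e He N0. destruct (H (disc l (mkposreal e He)) N0) as [p [Hp Hv]].
  - exists (mkposreal e He). intros x Hx; auto.
  - exists p; split; auto.
Qed.

(* Bolzano-Weierstrass in [C]: first on the real parts, then on the imaginary parts along an
   extracted subsequence [phi]. *)
Lemma bounded_cluster_point (z : nat -> C) Y : (forall n, Cnorm (z n) <= Y) ->
  exists zs, cluster_point z zs.
Proof.
  intros HY.
  destruct (Bolzano_Weierstrass (fun n => fst (z n)) (fun c => -Y <= c <= Y) (compact_P3 (-Y) Y))
    as [lx Hlx].
  { intros n. pose proof (Cnorm_fst (z n)). specialize (HY n). apply Rabs_le_inv. lra. }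
  pose proof (ValAdh_close _ _ Hlx) as Hx.
  assert (Hpick : forall k N0, {p | (N0 <= p)%nat /\ Rabs (fst (z p) - lx) < / (INR k + 1)}).
  { intros k N0. apply constructive_indefinite_description.
    apply Hx. pose proof (pos_INR k). apply Rinv_0_lt_compat. lra. }
  set (pk := fun k N0 => proj1_sig (Hpick k N0)).
  assert (Hpk : forall k N0, (N0 <= pk k N0)%nat /\ Rabs (fst (z (pk k N0)) - lx) < / (INR k + 1))
    by (intros; unfold pk; apply proj2_sig).
  set (phi := fix phi (k : nat) : nat :=
         match k with O => pk 0%nat 0%nat | S k' => pk (S k') (S (phi k')) end).
  assert (Hphi1 : forall k, (k <= phi k)%nat).
  { induction k; simpl; [lia|]. destruct (Hpk (S k) (S (phi k))) as [A _]. lia. }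
  assert (Hphi2 : forall k, Rabs (fst (z (phi k)) - lx) < / (INR k + 1)).
  { destruct k; simpl; apply Hpk. }
  destruct (Bolzano_Weierstrass (fun k => snd (z (phi k))) (fun c => -Y <= c <= Y)
              (compact_P3 (-Y) Y)) as [ly Hly].
  { intros n. pose proof (Cnorm_snd (z (phi n))). specialize (HY (phi n)).
    apply Rabs_le_inv. lra. }
  pose proof (ValAdh_close _ _ Hly) as Hy.
  exists (lx, ly). intros eta He N0.
  destruct (archimed_cor1 (eta / 2) ltac:(lra)) as [k0 [Hk0 Hk0p]].
  destruct (Hy (eta / 2) ltac:(lra) (Nat.max N0 k0)) as [k [Hk Hyk]].
  exists (phi k). split; [pose proof (Hphi1 k); lia|].
  eapply Rle_lt_trans; [apply Cnorm_le_l1|]. unfold Csub, Cadd, Copp; simpl.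
  assert (/ (INR k + 1) <= / INR k0).
  { apply Rinv_le_contravar. apply lt_0_INR; auto.
    assert (INR k0 <= INR k) by (apply le_INR; lia). lra. }
  specialize (Hphi2 k). unfold Rminus in *. lra.
Qed.

Definition seq_closed (S : C -> Prop) : Prop :=
  forall z zs, cluster_point z zs -> (forall n, S (z n)) -> S zs.

Lemma seq_closed_ge (P : C -> R) c :
  (forall x y, P x - P y <= Cnorm (Csub x y)) -> seq_closed (fun z => c <= P z).
Proof.
  intros HP z zs Ha Hc. destruct (Rle_or_lt c (P zs)) as [H|H]; auto.
  destruct (Ha (c - P zs) ltac:(lra) 0%nat) as [n [_ Hz]].
  specialize (Hc n). specialize (HP (z n) zs). lra.
Qed.

Lemma seq_closed_and S T : seq_closed S -> seq_closed T -> seq_closed (fun z => S z /\ T z).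
Proof. intros HS HT z zs Ha H. split; [apply (HS z)|apply (HT z)]; auto; apply H. Qed.

Lemma seq_closed_bounded_inf_pos (S : C -> Prop) (p : C -> R) Y K : 0 <= K ->
  (forall z, S z -> Cnorm z <= Y) -> seq_closed S ->
  (forall x y, Cnorm x <= Y -> Cnorm y <= Y -> p y - p x <= K * Cnorm (Csub x y)) ->
  (forall z, S z -> 0 < p z) ->
  exists m, 0 < m /\ forall z, S z -> m <= p z.
Proof.
  intros HK HY HS Hp Hpos. apply NNPP; intro Hn.
  assert (Hseq : forall n : nat, exists z, S z /\ p z < / (INR n + 1)).
  { intro n. apply NNPP; intro Hn2. apply Hn. exists (/ (INR n + 1)). split.
    { apply Rinv_0_lt_compat. pose proof (pos_INR n); lra. }
    intros z Hz. apply Rnot_lt_le. intro Hlt. apply Hn2. exists z. auto. }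
  set (zs := fun n => proj1_sig (constructive_indefinite_description _ (Hseq n))).
  assert (Hzs : forall n, S (zs n) /\ p (zs n) < / (INR n + 1))
    by (intro n; unfold zs; apply proj2_sig).
  destruct (bounded_cluster_point zs Y (fun n => HY _ (proj1 (Hzs n)))) as [zstar Hadh].
  assert (Hstar : S zstar) by (apply (HS zs); auto; apply Hzs).
  set (q := p zstar). assert (Hq : 0 < q) by (apply Hpos; auto).
  destruct (archimed_cor1 (q / 2) ltac:(lra)) as [N0 [HN0 HN0p]].
  set (eta := Rmin 1 (q / (2 * (K + 1)))).
  assert (Heta : 0 < eta) by (apply Rmin_pos; [lra|]; apply Rdiv_lt_0_compat; lra).
  destruct (Hadh eta Heta N0) as [n [Hn0 Hclose]].
  destruct (Hzs n) as [HSn Hpn].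
  pose proof (Hp (zs n) zstar (HY _ HSn) (HY _ Hstar)) as Hlip.
  assert (Hsmall : K * Cnorm (Csub (zs n) zstar) < q / 2).
  { assert (K * Cnorm (Csub (zs n) zstar) <= K * (q / (2 * (K + 1)))).
    { apply Rmult_le_compat_l; auto. pose proof (Rmin_r 1 (q / (2 * (K + 1)))) as Hm.
      fold eta in Hm. lra. }
    assert (K * (q / (2 * (K + 1))) < q / 2).
    { apply Rmult_lt_reg_r with (2 * (K + 1)); [lra|].
      replace (K * (q / (2 * (K + 1))) * (2 * (K + 1))) with (K * q) by (field; lra).
      lra. }
    lra. }
  assert (/ (INR n + 1) <= / INR N0).
  { apply Rinv_le_contravar. apply lt_0_INR; auto. apply le_INR in Hn0. lra. }
  unfold q in *. lra.
Qed.

(** * Roots near a dominant simple root *)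

Lemma mult_div_succ_le A x : 0 <= A -> 0 <= x -> A * (x / (A + 1)) <= x.
Proof.
  intros HA Hx. apply Rmult_le_reg_r with (A + 1); [lra|].
  replace (A * (x / (A + 1)) * (A + 1)) with (A * x) by (field; lra). nra.
Qed.

Lemma Rmin_lt_inv x y z : x < Rmin y z -> x < y /\ x < z.
Proof. intros H. pose proof (Rmin_l y z); pose proof (Rmin_r y z). lra. Qed.

Lemma regular_on_Cderiv R0 g g' K l d :
  regular_on R0 g g' K -> Cnorm l < R0 -> Cderiv g l d -> g' l = d.
Proof.
  intros [HK [_ [_ [_ Hrem]]]] Hl Hd. apply Cnorm_sub_eq0.
  apply Rle_antisym; [|apply Cnorm_pos].
  apply Rle_plus_epsilon. intros e He. rewrite Rplus_0_l.
  destruct (Hd (e / 2) ltac:(lra)) as [r [Hr Hrr]].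
  set (hh := Rmin (r / 2) (Rmin (e / (2 * (K + 1))) (R0 - Cnorm l))).
  pose proof (Rmin_l (r / 2) (Rmin (e / (2 * (K + 1))) (R0 - Cnorm l))).
  pose proof (Rmin_r (r / 2) (Rmin (e / (2 * (K + 1))) (R0 - Cnorm l))).
  pose proof (Rmin_l (e / (2 * (K + 1))) (R0 - Cnorm l)).
  pose proof (Rmin_r (e / (2 * (K + 1))) (R0 - Cnorm l)).
  fold hh in H, H0.
  assert (Hh : 0 < hh)
    by (unfold hh; repeat apply Rmin_pos; try lra; apply Rdiv_lt_0_compat; lra).
  set (h := RtoC hh).
  assert (Hhn : Cnorm h = hh) by (unfold h; rewrite Cnorm_RtoC; apply Rabs_pos_eq; lra).
  specialize (Hrr h ltac:(lra)). rewrite Hhn in Hrr.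
  assert (Hlh : Cnorm (Cadd l h) <= R0) by (pose proof (Cnorm_triang l h); lra).
  specialize (Hrem (Cadd l h) l l Hlh ltac:(lra) ltac:(lra)).
  replace (Csub (Cadd l h) l) with h in Hrem by Cring.
  replace (Csub l l) with C0 in Hrem by Cring. rewrite Cnorm_C0, Hhn in Hrem.
  assert (Hprod : Cnorm (Cmul (Csub (g' l) d) h) <= e / 2 * hh + K * (hh * (hh + 0))).
  { replace (Cmul (Csub (g' l) d) h) with
      (Csub (Csub (Csub (g (Cadd l h)) (g l)) (Cmul d h))
            (Csub (Csub (g (Cadd l h)) (g l)) (Cmul (g' l) h))) by Cring.
    eapply Rle_trans; [apply Cnorm_sub_le|]. lra. }
  rewrite Cnorm_mult, Hhn in Hprod.
  assert (K * hh <= e / 2).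
  { apply Rle_trans with (K * (e / 2 / (K + 1))).
    - apply Rmult_le_compat_l; auto.
      replace (e / 2 / (K + 1)) with (e / (2 * (K + 1))) by (field; lra). lra.
    - apply mult_div_succ_le; lra. }
  apply Rmult_le_reg_r with hh; auto. nra.
Qed.

(* Compare the first-order expansions of [g] and [h] over a step of length [rho] from [l]. *)
Lemma regular_on_deriv_close R0 g g' h h' K s l rho :
  regular_on R0 g g' K -> regular_on R0 h h' K ->
  (forall z, Cnorm z <= R0 -> Cnorm (Csub (g z) (h z)) <= s) ->
  0 < rho -> Cnorm l + rho <= R0 ->
  Cnorm (Csub (g' l) (h' l)) <= 2 * K * rho + 2 * s / rho.
Proof.
  intros [_ [_ [_ [_ Hg]]]] [_ [_ [_ [_ Hh]]]] Hs Hrho Hl.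
  set (v := RtoC rho).
  assert (Hv : Cnorm v = rho) by (unfold v; rewrite Cnorm_RtoC; apply Rabs_pos_eq; lra).
  assert (Hlv : Cnorm (Cadd l v) <= R0) by (pose proof (Cnorm_triang l v); lra).
  assert (Hl' : Cnorm l <= R0) by lra.
  specialize (Hg (Cadd l v) l l Hlv Hl' Hl'). specialize (Hh (Cadd l v) l l Hlv Hl' Hl').
  replace (Csub (Cadd l v) l) with v in Hg, Hh by Cring.
  replace (Csub l l) with C0 in Hg, Hh by Cring. rewrite Cnorm_C0, Hv in Hg, Hh.
  pose proof (Hs (Cadd l v) Hlv) as Hs1. pose proof (Hs l Hl') as Hs2.
  assert (Hprod : Cnorm (Csub (g' l) (h' l)) * rho <= 2 * K * (rho * rho) + 2 * s).
  { rewrite <- Hv, <- Cnorm_mult.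
    replace (Cmul (Csub (g' l) (h' l)) v) with
      (Cadd (Cadd (Csub (Csub (Csub (h (Cadd l v)) (h l)) (Cmul (h' l) v))
                        (Csub (Csub (g (Cadd l v)) (g l)) (Cmul (g' l) v)))
                  (Csub (g (Cadd l v)) (h (Cadd l v))))
            (Copp (Csub (g l) (h l)))) by Cring.
    eapply Rle_trans; [apply Cnorm_triang|]. rewrite Cnorm_opp.
    eapply Rle_trans; [apply Rplus_le_compat_r; apply Cnorm_triang|].
    eapply Rle_trans; [apply Rplus_le_compat_r, Rplus_le_compat_r; apply Cnorm_sub_le|].
    rewrite Hv. lra. }
  apply Rmult_le_reg_r with rho; auto.
  replace ((2 * K * rho + 2 * s / rho) * rho) with (2 * K * (rho * rho) + 2 * s) by (field; lra).
  exact Hprod.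
Qed.

Lemma regular_on_locally_injective R0 g g' K l r :
  regular_on R0 g g' K -> Cnorm l + r <= R0 -> 2 * K * r < Cnorm (g' l) ->
  forall z w, Cnorm (Csub z l) < r -> Cnorm (Csub w l) < r -> g z = g w -> z = w.
Proof.
  intros [HK [_ [_ [_ Hrem]]]] Hl Hd z w Hz Hw Heq.
  assert (Cnorm z <= R0) by (pose proof (Cnorm_le_dist z l); lra).
  assert (Cnorm w <= R0) by (pose proof (Cnorm_le_dist w l); lra).
  assert (0 <= r) by (pose proof (Cnorm_pos (Csub z l)); lra).
  specialize (Hrem z w l ltac:(auto) ltac:(auto) ltac:(lra)).
  rewrite Heq in Hrem.
  replace (Csub (Csub (g w) (g w)) (Cmul (g' l) (Csub z w)))
    with (Copp (Cmul (g' l) (Csub z w))) in Hrem by Cring.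
  rewrite Cnorm_opp, Cnorm_mult in Hrem.
  set (Dl := Cnorm (Csub z w)) in *. assert (0 <= Dl) by apply Cnorm_pos.
  assert (K * (Dl * (Cnorm (Csub z l) + Cnorm (Csub w l))) <= Dl * (2 * K * r)).
  { replace (Dl * (2 * K * r)) with (K * (Dl * (2 * r))) by ring.
    apply Rmult_le_compat_l; auto. apply Rmult_le_compat_l; lra. }
  apply Cnorm_sub_eq0. fold Dl. nra.
Qed.

Section DominantRoot.
Variables (f f' : R -> C -> C) (R0 D Cp Y0 lam0 : R) (d : C).
Hypothesis f_regular : forall eps, 0 <= eps <= 1 -> regular_on R0 (f eps) (f' eps) D.
Hypothesis f_perturbation : forall eps z, 0 <= eps <= 1 -> Cnorm z <= R0 ->
  Cnorm (Csub (f eps z) (f 0 z)) <= Cp * (eps * eps).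
Hypothesis Cp_pos : 0 <= Cp.
Hypothesis f_large : forall eps z, 0 <= fst z -> eps * eps * fst z <= 1/2 -> Y0 <= Cnorm z ->
  f eps z <> C0.
Hypothesis Y0_le : Y0 <= R0.
Hypothesis lam0_le : lam0 + 1 <= R0.
Hypothesis lam0_pos : 0 < lam0.
Hypothesis f0_deriv : Cderiv (f 0) (RtoC lam0) d.
Hypothesis d_neq0 : d <> C0.
Hypothesis f0_dominant : forall z, f 0 z = C0 -> z <> RtoC lam0 -> fst z < lam0.

Let l := RtoC lam0.

Let Cnorm_l : Cnorm l = lam0.
Proof. unfold l. rewrite Cnorm_RtoC. apply Rabs_pos_eq. lra. Qed.

Let D_pos : 0 <= D.
Proof. apply (f_regular 0 ltac:(lra)). Qed.

(* [f eps] stays injective near [l], uniformly in small [eps], because its derivative at [l]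
   stays close to [d <> 0]. *)
Lemma f_locally_injective : exists epsB r1, 0 < epsB <= 1 /\ 0 < r1 /\
  forall eps z w, 0 <= eps <= epsB -> Cnorm (Csub z l) < r1 -> Cnorm (Csub w l) < r1 ->
    f eps z = f eps w -> z = w.
Proof.
  set (dd := Cnorm d).
  assert (Hdd : 0 < dd).
  { destruct (Cnorm_pos d) as [X|X]; auto. exfalso. apply d_neq0, Cnorm_eq0. auto. }
  assert (Hf0' : f' 0 l = d)
    by (apply (regular_on_Cderiv R0 (f 0) (f' 0) D); auto; [apply f_regular|]; lra).
  set (rho := Rmin 1 (dd / (8 * (D + 1)))).
  pose proof (Rmin_l 1 (dd / (8 * (D + 1)))); pose proof (Rmin_r 1 (dd / (8 * (D + 1)))).
  fold rho in H, H0.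
  assert (Hrho : 0 < rho) by (apply Rmin_pos; [lra|]; apply Rdiv_lt_0_compat; lra).
  assert (HDrho : 2 * D * rho <= dd / 4).
  { pose proof (mult_div_succ_le D (dd / 8) D_pos ltac:(lra)) as Hq.
    replace (dd / 8 / (D + 1)) with (dd / (8 * (D + 1))) in Hq by (field; lra).
    assert (D * rho <= D * (dd / (8 * (D + 1)))) by (apply Rmult_le_compat_l; lra).
    lra. }
  set (epsB := Rmin 1 (dd * rho / (8 * (Cp + 1)))).
  pose proof (Rmin_l 1 (dd * rho / (8 * (Cp + 1)))).
  pose proof (Rmin_r 1 (dd * rho / (8 * (Cp + 1)))). fold epsB in H1, H2.
  assert (HeB : 0 < epsB) by (apply Rmin_pos; [lra|]; apply Rdiv_lt_0_compat; nra).
  exists epsB, rho. split; [lra|split; [auto|]]. intros eps z w Heps.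
  assert (Hs : Cp * (eps * eps) <= dd * rho / 8).
  { apply Rle_trans with (Cp * (dd * rho / 8 / (Cp + 1))); [|apply mult_div_succ_le; nra].
    apply Rmult_le_compat_l; auto.
    replace (dd * rho / 8 / (Cp + 1)) with (dd * rho / (8 * (Cp + 1))) by (field; lra). nra. }
  pose proof (regular_on_deriv_close R0 (f eps) (f' eps) (f 0) (f' 0) D (Cp * (eps * eps)) l rho
    (f_regular eps ltac:(lra)) (f_regular 0 ltac:(lra)) (fun z => f_perturbation eps z ltac:(lra))
    Hrho ltac:(lra)) as Hclose.
  rewrite Hf0' in Hclose. fold dd in Hclose.
  assert (2 * (Cp * (eps * eps)) / rho <= dd / 4).
  { apply Rmult_le_reg_r with rho; auto.
    replace (2 * (Cp * (eps * eps)) / rho * rho) with (2 * (Cp * (eps * eps))) by (field; lra).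
    lra. }
  pose proof (Cnorm_le_dist d (f' eps l)). rewrite Cnorm_sub_sym in H4. fold dd in H4.
  apply (regular_on_locally_injective R0 (f eps) (f' eps) D l rho); auto; try lra.
  apply f_regular; lra.
Qed.

(* [|f 0| + (lam0 - Re z)^+] is positive on a compact set avoiding [l], by dominance; a uniform
   positive lower bound for it yields both the width [dstar] and the bound [m]. *)
Lemma f0_away_from_root r1 : 0 < r1 -> exists dstar m, 0 < dstar <= lam0 / 2 /\ 0 < m /\
  forall z, lam0 - dstar <= fst z -> Cnorm z <= Y0 -> r1 <= Cnorm (Csub z l) ->
    m <= Cnorm (f 0 z).
Proof.
  intros Hr1.
  set (S := fun z => lam0 / 2 <= fst z /\ - Y0 <= - Cnorm z /\ r1 <= Cnorm (Csub z l)).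
  set (p := fun z => Cnorm (f 0 z) + Rmax 0 (lam0 - fst z)).
  destruct (seq_closed_bounded_inf_pos S p Y0 (D + 1)) as [m [Hm HmS]].
  - lra.
  - intros z Hz. destruct Hz as [_ [Hz _]]. lra.
  - repeat apply seq_closed_and; apply seq_closed_ge; intros x y.
    + apply Cnorm_fst_sub.
    + pose proof (Cnorm_le_dist y x). rewrite Cnorm_sub_sym in H. lra.
    + pose proof (Cnorm_dist_triang x y l). lra.
  - intros x y Hx Hy. unfold p.
    destruct (f_regular 0 ltac:(lra)) as [_ [_ [_ [Hlip _]]]].
    pose proof (Hlip y x ltac:(lra) ltac:(lra)) as Hl.
    rewrite (Cnorm_sub_sym y x) in Hl.
    pose proof (Cnorm_le_dist (f 0 y) (f 0 x)).
    pose proof (Cnorm_fst_sub x y).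
    assert (Rmax 0 (lam0 - fst y) - Rmax 0 (lam0 - fst x) <= Cnorm (Csub x y)).
    { pose proof (Cnorm_pos (Csub x y)).
      unfold Rmax; destruct (Rle_dec 0 (lam0 - fst y)), (Rle_dec 0 (lam0 - fst x)); lra. }
    lra.
  - intros z [Hz1 [_ Hz3]]. unfold p.
    destruct (Cnorm_pos (f 0 z)) as [X|X]; [pose proof (Rmax_l 0 (lam0 - fst z)); lra|].
    assert (Hne : z <> l).
    { intros ->. replace (Csub l l) with C0 in Hz3 by Cring. rewrite Cnorm_C0 in Hz3. lra. }
    pose proof (f0_dominant z (Cnorm_eq0 _ (eq_sym X)) Hne).
    pose proof (Rmax_r 0 (lam0 - fst z)). lra.
  - exists (Rmin (m / 2) (lam0 / 2)), (m / 2).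
    pose proof (Rmin_l (m / 2) (lam0 / 2)); pose proof (Rmin_r (m / 2) (lam0 / 2)).
    split; [split; [apply Rmin_pos|]; lra|split; [lra|]].
    intros z Hz1 Hz2 Hz3.
    assert (HSz : S z) by (unfold S; repeat split; lra).
    pose proof (HmS z HSz). unfold p in H1.
    assert (Rmax 0 (lam0 - fst z) <= m / 2) by (apply Rmax_lub; lra).
    lra.
Qed.

Lemma f_roots_in_strip_near_root r1 dstar m :
  (forall z, lam0 - dstar <= fst z -> Cnorm z <= Y0 -> r1 <= Cnorm (Csub z l) ->
     m <= Cnorm (f 0 z)) ->
  0 < dstar <= lam0 / 2 ->
  forall delta delta1 eps z, 0 < delta < dstar -> 0 < delta1 -> 0 < eps <= 1 ->
    Cp * eps < m -> eps * (lam0 + delta1) <= 1 / 2 ->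
    f eps z = C0 -> lam0 - delta <= fst z <= lam0 + delta1 -> Cnorm (Csub z l) < r1.
Proof.
  intros Haway Hdstar delta delta1 eps z Hdelta Hdelta1 Heps Hm Hsmall Hz Hstrip.
  assert (HzY : Cnorm z <= Y0).
  { apply Rnot_lt_le. intro X. apply (f_large eps z); [lra| |lra|exact Hz].
    assert (eps * eps * fst z <= eps * eps * (lam0 + delta1))
      by (apply Rmult_le_compat_l; nra).
    assert (eps * eps * (lam0 + delta1) <= eps * (lam0 + delta1))
      by (apply Rmult_le_compat_r; nra).
    lra. }
  apply Rnot_le_lt. intro Hfar.
  pose proof (Haway z ltac:(lra) HzY Hfar) as Hlow.
  pose proof (f_perturbation eps z ltac:(lra) ltac:(lra)) as Hp.
  rewrite Hz in Hp. replace (Csub C0 (f 0 z)) with (Copp (f 0 z)) in Hp by Cring.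
  rewrite Cnorm_opp in Hp.
  assert (Cp * (eps * eps) <= Cp * eps) by (apply Rmult_le_compat_l; nra).
  lra.
Qed.

Theorem dominant_root_isolated (lam : R -> R) :
  (exists eta, 0 < eta /\ forall eps, 0 < eps < eta -> f eps (RtoC (lam eps)) = C0) ->
  (forall e, 0 < e -> exists r, 0 < r /\
     forall eps, 0 < eps < r -> Rabs (lam eps - lam0) < e) ->
  exists dstar, 0 < dstar /\
    forall delta, 0 < delta < dstar ->
    forall delta1, 0 < delta1 ->
    exists eps0, 0 < eps0 /\
      forall eps, 0 < eps < eps0 ->
        (lam0 - delta <= lam eps <= lam0 + delta1) /\
        (forall z, f eps z = C0 ->
           lam0 - delta <= fst z <= lam0 + delta1 -> z = RtoC (lam eps)).
Proof.
  intros [eta [Heta Hlam]] Hconv.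
  destruct f_locally_injective as [epsB [r1 [HepsB [Hr1 Hinj]]]].
  destruct (f0_away_from_root r1 Hr1) as [dstar [m [Hdstar [Hm Haway]]]].
  exists dstar. split; [lra|]. intros delta Hdelta delta1 Hdelta1.
  destruct (Hconv (Rmin delta (Rmin delta1 r1))) as [r [Hr Hlr]].
  { repeat apply Rmin_pos; lra. }
  exists (Rmin (Rmin eta epsB) (Rmin r (Rmin (m / (Cp + 1)) (1 / (2 * (lam0 + delta1)))))).
  split; [repeat apply Rmin_pos; try apply Rdiv_lt_0_compat; lra|].
  intros eps [He1 He2].
  destruct (Rmin_lt_inv _ _ _ He2) as [He3 He4].
  destruct (Rmin_lt_inv _ _ _ He3) as [Heta' HepsB'].
  destruct (Rmin_lt_inv _ _ _ He4) as [Hr' He5].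
  destruct (Rmin_lt_inv _ _ _ He5) as [Hm' Hsmall].
  pose proof (Hlr eps (conj He1 Hr')) as Hl.
  pose proof (Rmin_l delta (Rmin delta1 r1)); pose proof (Rmin_r delta (Rmin delta1 r1)).
  pose proof (Rmin_l delta1 r1); pose proof (Rmin_r delta1 r1).
  pose proof (Rabs_def2 _ _ Hl).
  split; [lra|].
  intros z Hz Hstrip.
  assert (Hmul : Cp * eps < m).
  { apply Rle_lt_trans with (Cp * (m / (Cp + 1))); [apply Rmult_le_compat_l; lra|].
    apply Rmult_lt_reg_r with (Cp + 1); [lra|].
    replace (Cp * (m / (Cp + 1)) * (Cp + 1)) with (Cp * m) by (field; lra). nra. }
  assert (Hprod : eps * (lam0 + delta1) <= 1 / 2).
  { apply Rmult_le_reg_r with (/ (lam0 + delta1)); [apply Rinv_0_lt_compat; lra|].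
    replace (eps * (lam0 + delta1) * / (lam0 + delta1)) with eps by (field; lra).
    replace (1 / 2 * / (lam0 + delta1)) with (1 / (2 * (lam0 + delta1))) by (field; lra). lra. }
  pose proof (f_roots_in_strip_near_root r1 dstar m Haway Hdstar delta delta1 eps z
    Hdelta Hdelta1 ltac:(lra) Hmul Hprod Hz Hstrip) as Hnear.
  apply (Hinj eps z (RtoC (lam eps))); auto; try lra.
  - replace (Csub (RtoC (lam eps)) l) with (RtoC (lam eps - lam0)) by (unfold l; Cring).
    rewrite Cnorm_RtoC. lra.
  - rewrite Hz. symmetry. apply Hlam. lra.
Qed.

End DominantRoot.

Theorem lemma4p1 (N : nat) (tau : R) (L : (R -> nat -> R) -> nat -> R)
    (lam0 : R) (lam : R -> R) :
  0 < tau ->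
  bounded_linear_op tau N L ->
  0 < lam0 ->
  charfun L N 0 (RtoC lam0) = C0 ->
  (exists d, Cderiv (charfun L N 0) (RtoC lam0) d /\ d <> C0) ->
  (forall z, charfun L N 0 z = C0 -> z <> RtoC lam0 -> fst z < lam0) ->
  (exists eta, 0 < eta /\
     forall eps, 0 < eps < eta -> charfun L N eps (RtoC (lam eps)) = C0) ->
  (forall e, 0 < e -> exists r, 0 < r /\
     forall eps, 0 < eps < r -> Rabs (lam eps - lam0) < e) ->
  exists dstar, 0 < dstar /\
    forall delta, 0 < delta < dstar ->
    forall delta1, 0 < delta1 ->
    exists eps0, 0 < eps0 /\
      forall eps, 0 < eps < eps0 ->
        (lam0 - delta <= lam eps <= lam0 + delta1) /\
        (forall z, charfun L N eps z = C0 ->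
           lam0 - delta <= fst z <= lam0 + delta1 -> z = RtoC (lam eps)).
Proof.
  intros Htau HL Hlam0 _ [d [Hd Hd0]] Hdom Hlam Hconv.
  destruct (charfun_large tau N L ltac:(lra) HL) as [Y0 [HY0 Hlarge]].
  set (R0 := Y0 + lam0 + 1).
  destruct (charfun_regular tau N L R0 ltac:(lra) HL ltac:(unfold R0; lra)) as [D [_ Hreg]].
  destruct (charfun_perturbation tau N L R0 ltac:(lra) HL ltac:(unfold R0; lra))
    as [Cp [HCp Hpert]].
  exact (dominant_root_isolated (charfun L N) _ R0 D Cp Y0 lam0 d Hreg Hpert HCp Hlarge
           ltac:(unfold R0; lra) ltac:(unfold R0; lra) Hlam0 Hd Hd0 Hdom lam Hlam Hconv).
Qed.
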